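(* Let $E_1=(\bar S,\bar V_1,\bar I_1,0)$, with $\bar S,\bar V_1,\bar I_1>0$, be a single-strain ($I_1$)-infection equilibrium of the model. Let $\bar{\mathcal{R}}_2=\frac{1}{\alpha_2}\frac{\partial F_2}{\partial I_2}(\bar S,0)+\frac{k\bar V_1}{\alpha_2}$. Then $E_1$ is unstable if $\bar{\mathcal{R}}_2>1$ and locally asymptotically stable if $\bar{\mathcal{R}}_2<1$.
   Context: The model is $\dot S=\Lambda-F_1(S,I_1)-F_2(S,I_2)-\lambda S$, $\dot V_1=rS-(\mu+kI_2)V_1$, $\dot I_1=F_1(S,I_1)-\alpha_1I_1$, $\dot I_2=F_2(S,I_2)+kI_2V_1-\alpha_2I_2$ on $\mathbb{R}^4_+$. The constants $\Lambda,\mu,r,k,\gamma_1,\gamma_2>0$ and $v_1,v_2\ge0$; $\lambda=r+\mu$ and $\alpha_i=\gamma_i+v_i+\mu$. For $i=1,2$ the incidence functions satisfy: - (H1) $F_i(S,I_i)=I_if_i(S,I_i)$ with $F_i,f_i\in C^2(\mathbb{R}^2_+,\mathbb{R}_+)$ and $F_i(0,I_i)=F_i(S,0)=0$; - (H2) $\partial f_i/\partial S>0$ and $\partial f_i/\partial I_i\le0$; - (H3) $\lim_{I_i\to0^+}F_i(S,I_i)/I_i$ exists and is positive for $S>0$. *)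

From Stdlib Require Import Reals.
From Coquelicot Require Import Coquelicot.
Open Scope R_scope.

Definition d1 (F : R -> R -> R) (x y : R) : R := Derive (fun u => F u y) x.
Definition d2 (F : R -> R -> R) (x y : R) : R := Derive (fun v => F x v) y.

Definition C2_R2 (F : R -> R -> R) : Prop :=
  (forall x y, ex_derive (fun u => F u y) x /\ ex_derive (fun v => F x v) y) /\
  (forall x y, ex_derive (fun u => d1 F u y) x /\ ex_derive (fun v => d1 F x v) y /\
               ex_derive (fun u => d2 F u y) x /\ ex_derive (fun v => d2 F x v) y) /\
  (forall x y,
     continuous (fun p : R * R => F (fst p) (snd p)) (x, y) /\
     continuous (fun p : R * R => d1 F (fst p) (snd p)) (x, y) /\
     continuous (fun p : R * R => d2 F (fst p) (snd p)) (x, y) /\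
     continuous (fun p : R * R => d1 (d1 F) (fst p) (snd p)) (x, y) /\
     continuous (fun p : R * R => d2 (d1 F) (fst p) (snd p)) (x, y) /\
     continuous (fun p : R * R => d1 (d2 F) (fst p) (snd p)) (x, y) /\
     continuous (fun p : R * R => d2 (d2 F) (fst p) (snd p)) (x, y)).

Definition incidence_hyp (F f : R -> R -> R) : Prop :=
  C2_R2 F /\ C2_R2 f /\
  (forall S I, 0 <= S -> 0 <= I -> 0 <= F S I /\ 0 <= f S I) /\
  (forall S I, 0 <= S -> 0 <= I -> F S I = I * f S I) /\
  (forall I, 0 <= I -> F 0 I = 0) /\
  (forall S, 0 <= S -> F S 0 = 0) /\
  (forall S I, 0 <= S -> 0 <= I -> d1 f S I > 0 /\ d2 f S I <= 0) /\
  (forall S, 0 < S -> exists l, 0 < l /\ filterlim (fun I => F S I / I) (at_right 0) (locally l)).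

Record params := mkParams {
  Lam : R; mu : R; r : R; k : R; gam1 : R; gam2 : R; v1 : R; v2 : R }.

Definition params_ok (p : params) : Prop :=
  0 < Lam p /\ 0 < mu p /\ 0 < r p /\ 0 < k p /\ 0 < gam1 p /\ 0 < gam2 p /\
  0 <= v1 p /\ 0 <= v2 p.

Definition lam (p : params) : R := r p + mu p.
Definition alpha1 (p : params) : R := gam1 p + v1 p + mu p.
Definition alpha2 (p : params) : R := gam2 p + v2 p + mu p.

Record state := mkState { sS : R; sV : R; sI1 : R; sI2 : R }.

Definition nonneg_state (x : state) : Prop :=
  0 <= sS x /\ 0 <= sV x /\ 0 <= sI1 x /\ 0 <= sI2 x.

Definition field (p : params) (F1 F2 : R -> R -> R) (x : state) : state :=
  mkState
    (Lam p - F1 (sS x) (sI1 x) - F2 (sS x) (sI2 x) - lam p * sS x)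
    (r p * sS x - (mu p + k p * sI2 x) * sV x)
    (F1 (sS x) (sI1 x) - alpha1 p * sI1 x)
    (F2 (sS x) (sI2 x) + k p * sI2 x * sV x - alpha2 p * sI2 x).

Definition is_equilibrium (p : params) (F1 F2 : R -> R -> R) (x : state) : Prop :=
  field p F1 F2 x = mkState 0 0 0 0.

Definition dist4 (x y : state) : R :=
  Rmax (Rmax (Rabs (sS x - sS y)) (Rabs (sV x - sV y)))
       (Rmax (Rabs (sI1 x - sI1 y)) (Rabs (sI2 x - sI2 y))).

Definition is_solution (p : params) (F1 F2 : R -> R -> R) (X : R -> state) : Prop :=
  (forall t, 0 < t ->
     is_derive (fun s => sS (X s)) t (sS (field p F1 F2 (X t))) /\
     is_derive (fun s => sV (X s)) t (sV (field p F1 F2 (X t))) /\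
     is_derive (fun s => sI1 (X s)) t (sI1 (field p F1 F2 (X t))) /\
     is_derive (fun s => sI2 (X s)) t (sI2 (field p F1 F2 (X t)))) /\
  filterlim (fun s => sS (X s)) (at_right 0) (locally (sS (X 0))) /\
  filterlim (fun s => sV (X s)) (at_right 0) (locally (sV (X 0))) /\
  filterlim (fun s => sI1 (X s)) (at_right 0) (locally (sI1 (X 0))) /\
  filterlim (fun s => sI2 (X s)) (at_right 0) (locally (sI2 (X 0))).

Definition lyap_stable (p : params) (F1 F2 : R -> R -> R) (E : state) : Prop :=
  forall eps, 0 < eps -> exists delta, 0 < delta /\
    forall X, is_solution p F1 F2 X -> nonneg_state (X 0) ->
      dist4 (X 0) E < delta -> forall t, 0 <= t -> dist4 (X t) E < eps.

Definition unstable (p : params) (F1 F2 : R -> R -> R) (E : state) : Prop :=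
  ~ lyap_stable p F1 F2 E.

Definition loc_asymp_stable (p : params) (F1 F2 : R -> R -> R) (E : state) : Prop :=
  lyap_stable p F1 F2 E /\
  exists delta0, 0 < delta0 /\
    forall X, is_solution p F1 F2 X -> nonneg_state (X 0) ->
      dist4 (X 0) E < delta0 ->
      is_lim (fun t => dist4 (X t) E) p_infty 0.

Definition Rbar2 (p : params) (F2 : R -> R -> R) (Sb Vb : R) : R :=
  / alpha2 p * d2 F2 Sb 0 + k p * Vb / alpha2 p.

From Stdlib Require Import Reals Lra Lia Factorial FunctionalExtensionality.
From Coquelicot Require Import Coquelicot.
Open Scope R_scope.

(* Near E1 the I2-equation reads I2' = I2 (f2(S, I2) + k V1 - alpha2), with a
   rate close to alpha2 (Rbar2 - 1) > 0.  A solution started at E1 with a small I2 > 0 exists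
   (Picard iteration for the field frozen outside a box, the box being invariant), and as long
   as it stays near E1 its I2-component grows at least linearly, so it has to leave.

   The linearisation at E1 is block triangular: the (S, I1)-block has negative
   trace and positive determinant because dF1/dS > 0 and dF1/dI1 <= f1 = alpha1 by (H2); V1 is
   damped at rate mu and I2 at rate alpha2 (1 - Rbar2).  An explicit quadratic form L of the
   deviation decreases along the linear flow at rate kappa |x - E1|^2, which dominates the
   higher-order terms near E1; this gives Lyapunov stability and exponential decay of L. *)

(* Coquelicot's generic rules, stated over R so that [apply] unifies them with
   [Rplus], [Rmult] and numeral constants. *)
Lemma is_derive_const_R (c x : R) : is_derive (fun _ => c) x 0.
Proof. exact (is_derive_const c x). Qed.

Lemma is_derive_id_R (x : R) : is_derive (fun t => t) x 1.
Proof. exact (is_derive_id x). Qed.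

Lemma is_derive_plus_R (f g : R -> R) (x df dg : R) :
  is_derive f x df -> is_derive g x dg -> is_derive (fun t => f t + g t) x (df + dg).
Proof. exact (is_derive_plus f g x df dg). Qed.

Lemma is_derive_minus_R (f g : R -> R) (x df dg : R) :
  is_derive f x df -> is_derive g x dg -> is_derive (fun t => f t - g t) x (df - dg).
Proof. exact (is_derive_minus f g x df dg). Qed.

Lemma is_derive_mult_R (f g : R -> R) (x df dg : R) :
  is_derive f x df -> is_derive g x dg -> is_derive (fun t => f t * g t) x (df * g x + f x * dg).
Proof. intros Hf Hg. exact (is_derive_mult f g x df dg Hf Hg (fun _ _ => Rmult_comm _ _)). Qed.

Lemma continuous_plus_R (f g : R -> R) (x : R) :
  continuous f x -> continuous g x -> continuous (fun t => f t + g t) x.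
Proof. exact (continuous_plus f g x). Qed.

Lemma continuous_mult_R (f g : R -> R) (x : R) :
  continuous f x -> continuous g x -> continuous (fun t => f t * g t) x.
Proof. exact (continuous_mult f g x). Qed.

Section FilterlimR.

Context {T : Type} {F : (T -> Prop) -> Prop} {FF : Filter F}.

Lemma filterlim_plus_R (f g : T -> R) (lf lg : R) :
  filterlim f F (locally lf) -> filterlim g F (locally lg) ->
  filterlim (fun t => f t + g t) F (locally (lf + lg)).
Proof.
  intros Hf Hg. exact (filterlim_comp_2 f g Rplus Hf Hg (filterlim_plus (V := R_NormedModule) lf lg)).
Qed.

Lemma filterlim_mult_R (f g : T -> R) (lf lg : R) :
  filterlim f F (locally lf) -> filterlim g F (locally lg) ->
  filterlim (fun t => f t * g t) F (locally (lf * lg)).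
Proof.
  intros Hf Hg. exact (filterlim_comp_2 f g Rmult Hf Hg (filterlim_mult (K := R_AbsRing) lf lg)).
Qed.

Lemma filterlim_minus_R (f g : T -> R) (lf lg : R) :
  filterlim f F (locally lf) -> filterlim g F (locally lg) ->
  filterlim (fun t => f t - g t) F (locally (lf - lg)).
Proof.
  intros Hf Hg. apply filterlim_plus_R; [exact Hf|].
  exact (filterlim_comp _ _ _ g Ropp F (locally lg) (locally (- lg)) Hg
           (filterlim_opp (V := R_NormedModule) lg)).
Qed.

End FilterlimR.

Lemma continuous_R_eps (f : R -> R) x :
  continuous f x <-> forall e, 0 < e -> exists d, 0 < d /\
     forall y, Rabs (y - x) < d -> Rabs (f y - f x) < e.
Proof.
  split.
  - intros Hf e He.
    destruct (proj1 (filterlim_locally f (f x)) Hf (mkposreal e He)) as [d Hd].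
    exists d; split; [apply cond_pos|]. intros y Hy. exact (Hd y Hy).
  - intros Hf. apply filterlim_locally. intros [e He].
    destruct (Hf e He) as [d [Hd Hy]]. exists (mkposreal d Hd). exact Hy.
Qed.

Lemma continuous_R2_eps (g : R -> R -> R) x y :
  continuous (fun p : R * R => g (fst p) (snd p)) (x, y) ->
  forall e, 0 < e -> exists d, 0 < d /\
     forall x' y', Rabs (x' - x) < d -> Rabs (y' - y) < d -> Rabs (g x' y' - g x y) < e.
Proof.
  intros Hg e He.
  destruct (proj1 (filterlim_locally _ (g x y)) Hg (mkposreal e He)) as [d Hd].
  exists d; split; [apply cond_pos|]. intros x' y' Hx Hy. exact (Hd (x', y') (conj Hx Hy)).
Qed.

Lemma right_limit_eps (y : R -> R) a :
  filterlim y (at_right a) (locally (y a)) ->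
  forall e, 0 < e -> exists d, 0 < d /\ forall t, a < t < a + d -> Rabs (y t - y a) < e.
Proof.
  intros Hy e He.
  destruct (proj1 (filterlim_locally _ _) Hy (mkposreal e He)) as [d Hd].
  exists d; split; [apply cond_pos|]. intros t Ht. apply (Hd t); [|lra].
  change (Rabs (t - a) < d). rewrite Rabs_right; lra.
Qed.

Lemma continuous_at_right (y : R -> R) a :
  continuous y a -> filterlim y (at_right a) (locally (y a)).
Proof.
  intros Hy. eapply filterlim_filter_le_1; [|exact Hy].
  intros P [d Hd]. exists d. intros z Hz _. exact (Hd z Hz).
Qed.

Lemma is_lub_approx (A : R -> Prop) m :
  is_lub A m -> forall d, 0 < d -> exists x, A x /\ m - d < x.
Proof.
  intros [Hub Hlub] d Hd. apply Classical_Prop.NNPP. intros Hno.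
  enough (m <= m - d) by lra.
  apply Hlub. intros x Hx. destruct (Rle_or_lt x (m - d)) as [|Hlt]; [assumption|].
  exfalso. exact (Hno (ex_intro _ x (conj Hx Hlt))).
Qed.

Section Comparison.

Variables (y dy : R -> R).
Hypothesis y_derive : forall t, 0 < t -> is_derive y t (dy t).
Hypothesis y_right_cont : filterlim y (at_right 0) (locally (y 0)).

Lemma y_continuous t : 0 < t -> continuous y t.
Proof.
  intros Ht. apply (ex_derive_continuous (K := R_AbsRing) (V := R_NormedModule)).
  exists (dy t). exact (y_derive t Ht).
Qed.

Lemma y_right_cont_nonneg a : 0 <= a -> filterlim y (at_right a) (locally (y a)).
Proof.
  intros Ha. destruct (Req_dec a 0) as [->|Hne]; [exact y_right_cont|].
  apply continuous_at_right, y_continuous. lra.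
Qed.

Lemma derive_nonpos_le_pos a b :
  0 < a < b -> (forall t, a < t < b -> dy t <= 0) -> y b <= y a.
Proof.
  intros Hab Hdy. destruct (MVT_cor2 y dy a b) as [c [Hc Hcab]]; [lra| |].
  - intros c Hc. apply is_derive_Reals, y_derive. lra.
  - assert (dy c <= 0) by (apply Hdy; lra). nra.
Qed.

Lemma derive_nonpos_le a b :
  0 <= a < b -> (forall t, a < t < b -> dy t <= 0) -> y b <= y a.
Proof.
  intros Hab Hdy. destruct (Rle_lt_or_eq_dec 0 a (proj1 Hab)) as [Ha|<-].
  { apply derive_nonpos_le_pos; [lra|exact Hdy]. }
  destruct (Rle_or_lt (y b) (y 0)) as [|Hlt]; [assumption|exfalso].
  destruct (right_limit_eps y 0 y_right_cont (y b - y 0)) as [d [Hd Hnear]]; [lra|].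
  set (a := Rmin (d / 2) (b / 2)).
  assert (Ha : 0 < a < b /\ a < d).
  { unfold a. pose proof (Rmin_l (d / 2) (b / 2)). pose proof (Rmin_r (d / 2) (b / 2)).
    pose proof (Rmin_pos (d / 2) (b / 2)). lra. }
  assert (y b <= y a) by (apply derive_nonpos_le_pos; [lra|intros t Ht; apply Hdy; lra]).
  assert (Hya : Rabs (y a - y 0) < y b - y 0) by (apply Hnear; lra).
  apply Rabs_def2 in Hya. lra.
Qed.

(* At the last time m before t0 with y m <= c, continuity keeps y below d for a while
   after m, and there y can only decrease. *)
Lemma barrier c d :
  y 0 <= c < d -> (forall t, 0 < t -> c < y t < d -> dy t <= 0) ->
  forall t, 0 <= t -> y t <= c.
Proof.
  intros Hc Hdy t0 Ht0.
  destruct (Rle_or_lt (y t0) c) as [|Hgt]; [assumption|exfalso].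
  set (A := fun tau => 0 <= tau <= t0 /\ y tau <= c).
  assert (HA0 : A 0) by (split; [lra|apply Hc]).
  destruct (completeness A) as [m Hm];
    [exists t0; intros x [Hx _]; lra|exists 0; exact HA0|].
  pose proof Hm as [Hub Hlub].
  assert (Hm0 : 0 <= m) by (apply Hub, HA0).
  assert (Hmt : m <= t0) by (apply Hlub; intros x [Hx _]; lra).
  assert (Hym : y m <= c).
  { destruct (Rle_lt_or_eq_dec 0 m Hm0) as [Hmp|<-]; [|apply Hc].
    destruct (Rle_or_lt (y m) c) as [|Hlt]; [assumption|exfalso].
    destruct (proj1 (continuous_R_eps y m) (y_continuous m Hmp) (y m - c))
      as [e [He Hnear]]; [lra|].
    destruct (is_lub_approx A m Hm e He) as [tau [[Htau Hytau] Hmtau]].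
    assert (tau <= m) by (apply Hub; split; assumption).
    assert (Hy : Rabs (y tau - y m) < y m - c) by (apply Hnear; rewrite Rabs_left1; lra).
    apply Rabs_def2 in Hy. lra. }
  assert (Hmt' : m < t0) by (destruct (Rle_lt_or_eq_dec _ _ Hmt) as [|<-]; lra).
  assert (Habove : forall t, m < t <= t0 -> c < y t).
  { intros t Ht. destruct (Rle_or_lt (y t) c) as [Hle|]; [|assumption].
    assert (t <= m) by (apply Hub; split; [lra|assumption]). lra. }
  destruct (right_limit_eps y m (y_right_cont_nonneg m Hm0) (d - y m)) as [e [He Hnear]];
    [lra|].
  set (t1 := Rmin (m + e / 2) t0).
  assert (Ht1 : m < t1 <= t0 /\ t1 < m + e).
  { unfold t1. repeat split; [apply Rmin_glb_lt; lra|apply Rmin_r|].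
    apply Rle_lt_trans with (m + e / 2); [apply Rmin_l|lra]. }
  assert (y t1 <= y m).
  { apply derive_nonpos_le; [lra|]. intros t Ht. apply Hdy; [lra|split].
    - apply Habove. lra.
    - assert (Hy : Rabs (y t - y m) < d - y m) by (apply Hnear; lra).
      apply Rabs_def2 in Hy. lra. }
  assert (c < y t1) by (apply Habove; lra). lra.
Qed.

Lemma upper_barrier c :
  y 0 <= c -> (forall t, 0 < t -> c < y t -> dy t <= 0) -> forall t, 0 <= t -> y t <= c.
Proof.
  intros Hc Hdy. apply (barrier c (c + 1)); [lra|]. intros t Ht [Hyt _]. exact (Hdy t Ht Hyt).
Qed.

End Comparison.

Lemma lower_barrier (y dy : R -> R) c :
  (forall t, 0 < t -> is_derive y t (dy t)) -> filterlim y (at_right 0) (locally (y 0)) ->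
  c <= y 0 -> (forall t, 0 < t -> y t < c -> 0 <= dy t) -> forall t, 0 <= t -> c <= y t.
Proof.
  intros Hd Hc Hy0 Hdy t Ht.
  enough (- y t <= - c) by lra.
  apply (upper_barrier (fun t => - y t) (fun t => - dy t)); [| |lra| |exact Ht].
  - intros u Hu. apply (is_derive_opp y), Hd, Hu.
  - apply (filterlim_comp _ _ _ y Ropp (at_right 0) (locally (y 0))); [exact Hc|].
    apply (filterlim_opp (V := R_NormedModule)).
  - intros u Hu Hlt. enough (0 <= dy u) by lra. apply Hdy; lra.
Qed.

Lemma growth_linear_lower_bound (y dy : R -> R) c :
  (forall t, 0 < t -> is_derive y t (dy t)) -> filterlim y (at_right 0) (locally (y 0)) ->
  0 < c -> (forall t, 0 <= t -> 0 <= y t) -> (forall t, 0 < t -> c * y t <= dy t) ->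
  forall t, 0 <= t -> y 0 * (1 + c * t) <= y t.
Proof.
  intros Hd Hr Hc Hnn Hgrow.
  assert (Hge : forall t, 0 <= t -> y 0 <= y t).
  { apply (lower_barrier y dy); [exact Hd|exact Hr|lra|].
    intros t Ht _. pose proof (Hgrow t Ht). pose proof (Hnn t (Rlt_le _ _ Ht)). nra. }
  intros t Ht.
  enough (y 0 + c * y 0 * t - y t <= 0) by lra.
  apply (upper_barrier (fun t => y 0 + c * y 0 * t - y t) (fun t => c * y 0 - dy t)); [| |lra| |exact Ht].
  - intros u Hu. replace (c * y 0 - dy u) with (0 + c * y 0 * 1 - dy u) by ring.
    apply is_derive_minus_R; [|now apply Hd].
    apply is_derive_plus_R; [apply is_derive_const_R|apply is_derive_scal, is_derive_id_R].
  - apply (filterlim_minus_R (fun t => y 0 + c * y 0 * t) y); [|exact Hr].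
    apply (continuous_at_right (fun t => y 0 + c * y 0 * t)), continuous_plus_R;
      [apply continuous_const|apply continuous_mult_R; [apply continuous_const|apply continuous_id]].
  - intros u Hu _. pose proof (Hgrow u Hu). pose proof (Hge u (Rlt_le _ _ Hu)).
    assert (c * y 0 <= c * y u) by (apply Rmult_le_compat_l; lra). lra.
Qed.

Lemma exp_decay_bound (y dy : R -> R) c :
  (forall t, 0 < t -> is_derive y t (dy t)) -> filterlim y (at_right 0) (locally (y 0)) ->
  (forall t, 0 < t -> dy t <= - c * y t) -> forall t, 0 <= t -> y t * exp (c * t) <= y 0.
Proof.
  intros Hd Hr Hdec t Ht.
  assert (Hexp : forall u, is_derive (fun t => exp (c * t)) u (c * exp (c * u))).
  { intros u. auto_derive; [auto|ring]. }
  enough (H : y t * exp (c * t) <= y 0 * exp (c * 0))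
    by (rewrite Rmult_0_r, exp_0, Rmult_1_r in H; exact H).
  apply (upper_barrier (fun t => y t * exp (c * t))
           (fun t => dy t * exp (c * t) + y t * (c * exp (c * t)))); [| |apply Rle_refl| |exact Ht].
  - intros u Hu. apply (is_derive_mult_R y (fun t => exp (c * t))); [now apply Hd|apply Hexp].
  - apply filterlim_mult_R; [exact Hr|]. apply (continuous_at_right (fun t => exp (c * t))).
    apply (ex_derive_continuous (K := R_AbsRing) (V := R_NormedModule)). eexists. apply Hexp.
  - intros u Hu _. pose proof (Hdec u Hu). pose proof (exp_pos (c * u)).
    assert (0 <= - (dy u + c * y u) * exp (c * u)) by (apply Rmult_le_pos; lra). lra.
Qed.

Lemma is_lim_of_sq_exp_bound (u : R -> R) A c :
  0 < c -> (forall t, 0 <= t -> 0 <= u t) ->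
  (forall t, 0 <= t -> u t * u t * exp (c * t) <= A) -> is_lim u p_infty 0.
Proof.
  intros Hc Hnn Hbound. apply is_lim_spec. intros [e He]. simpl.
  assert (HA : 0 <= A).
  { eapply Rle_trans; [|apply (Hbound 0 (Rle_refl 0))].
    pose proof (exp_pos (c * 0)). pose proof (Hnn 0 (Rle_refl 0)). apply Rmult_le_pos; nra. }
  set (T := ln ((A + 1) / (e * e)) / c).
  exists (Rmax 0 T). intros t Ht.
  assert (Ht0 : 0 < t) by (eapply Rle_lt_trans; [apply Rmax_l|exact Ht]).
  assert (HT : T < t) by (eapply Rle_lt_trans; [apply Rmax_r|exact Ht]).
  assert (Hee : 0 < e * e) by nra.
  assert (Hexp : (A + 1) / (e * e) < exp (c * t)).
  { rewrite <- (exp_ln ((A + 1) / (e * e))) by (apply Rdiv_lt_0_compat; lra).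
    apply exp_increasing. unfold T in HT.
    apply Rmult_lt_compat_l with (r := c) in HT; [|exact Hc].
    replace (c * (ln ((A + 1) / (e * e)) / c)) with (ln ((A + 1) / (e * e))) in HT by (field; lra).
    exact HT. }
  pose proof (Hbound t (Rlt_le _ _ Ht0)) as Hbt. pose proof (Hnn t (Rlt_le _ _ Ht0)).
  assert (Hsq : u t * u t * ((A + 1) / (e * e)) <= A).
  { apply Rle_trans with (u t * u t * exp (c * t)); [|exact Hbt].
    apply Rmult_le_compat_l; [nra|lra]. }
  assert (u t * u t * (A + 1) <= A * (e * e)).
  { apply Rmult_le_compat_r with (r := e * e) in Hsq; [|lra].
    replace (u t * u t * ((A + 1) / (e * e)) * (e * e)) with (u t * u t * (A + 1)) in Hsq
      by (field; lra).
    exact Hsq. }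
  rewrite Rminus_0_r, Rabs_right by lra.
  destruct (Rlt_or_le (u t) e) as [|Hge]; [assumption|exfalso].
  assert (e * e <= u t * u t) by (apply Rmult_le_compat; lra).
  assert (e * e * (A + 1) <= u t * u t * (A + 1)) by (apply Rmult_le_compat_r; lra).
  lra.
Qed.

Inductive coord := cS | cV | cI1 | cI2.

Definition component (c : coord) (x : state) : R :=
  match c with cS => sS x | cV => sV x | cI1 => sI1 x | cI2 => sI2 x end.

Definition of_components (f : coord -> R) : state := mkState (f cS) (f cV) (f cI1) (f cI2).

Lemma component_of_components f c : component c (of_components f) = f c.
Proof. now destruct c. Qed.

Lemma of_components_component x : of_components (fun c => component c x) = x.
Proof. now destruct x. Qed.

Lemma dist4_le x y e :
  (forall c, Rabs (component c x - component c y) <= e) -> dist4 x y <= e.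
Proof.
  intros H. unfold dist4.
  repeat apply Rmax_lub; [apply (H cS)|apply (H cV)|apply (H cI1)|apply (H cI2)].
Qed.

Lemma component_dist_le x y c : Rabs (component c x - component c y) <= dist4 x y.
Proof.
  unfold dist4. pose proof (Rmax_l (Rmax (Rabs (sS x - sS y)) (Rabs (sV x - sV y)))
                              (Rmax (Rabs (sI1 x - sI1 y)) (Rabs (sI2 x - sI2 y)))).
  pose proof (Rmax_r (Rmax (Rabs (sS x - sS y)) (Rabs (sV x - sV y)))
                     (Rmax (Rabs (sI1 x - sI1 y)) (Rabs (sI2 x - sI2 y)))).
  destruct c; simpl.
  - pose proof (Rmax_l (Rabs (sS x - sS y)) (Rabs (sV x - sV y))). lra.
  - pose proof (Rmax_r (Rabs (sS x - sS y)) (Rabs (sV x - sV y))). lra.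
  - pose proof (Rmax_l (Rabs (sI1 x - sI1 y)) (Rabs (sI2 x - sI2 y))). lra.
  - pose proof (Rmax_r (Rabs (sI1 x - sI1 y)) (Rabs (sI2 x - sI2 y))). lra.
Qed.

Lemma dist4_nonneg x y : 0 <= dist4 x y.
Proof. eapply Rle_trans; [apply Rabs_pos|apply (component_dist_le x y cS)]. Qed.

Lemma dist4_attained x y : exists c, dist4 x y = Rabs (component c x - component c y).
Proof.
  unfold dist4, Rmax. repeat destruct Rle_dec.
  all: first [exists cS; reflexivity | exists cV; reflexivity
             | exists cI1; reflexivity | exists cI2; reflexivity].
Qed.

Lemma dist4_sq_le x y :
  dist4 x y * dist4 x y <=
  (sS x - sS y) * (sS x - sS y) + (sI1 x - sI1 y) * (sI1 x - sI1 y)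
  + (sV x - sV y) * (sV x - sV y) + (sI2 x - sI2 y) * (sI2 x - sI2 y).
Proof.
  destruct (dist4_attained x y) as [c Hc].
  rewrite Hc, <- Rabs_mult, Rabs_right by (apply Rle_ge, Rle_0_sqr).
  pose proof (Rle_0_sqr (sS x - sS y)). pose proof (Rle_0_sqr (sI1 x - sI1 y)).
  pose proof (Rle_0_sqr (sV x - sV y)). pose proof (Rle_0_sqr (sI2 x - sI2 y)). unfold Rsqr in *.
  destruct c; simpl; lra.
Qed.

Lemma sq_le_of_abs_le z nu : Rabs z <= nu -> z * z <= nu * nu.
Proof.
  intros H. pose proof (Rabs_pos z).
  rewrite <- (Rabs_right (z * z)), Rabs_mult by (apply Rle_ge, Rle_0_sqr).
  apply Rmult_le_compat; lra.
Qed.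

Lemma sq_le_dist4_sq x y :
  (sS x - sS y) * (sS x - sS y) + (sI1 x - sI1 y) * (sI1 x - sI1 y)
  + (sV x - sV y) * (sV x - sV y) + (sI2 x - sI2 y) * (sI2 x - sI2 y) <= 4 * (dist4 x y * dist4 x y).
Proof.
  pose proof (sq_le_of_abs_le _ _ (component_dist_le x y cS)).
  pose proof (sq_le_of_abs_le _ _ (component_dist_le x y cV)).
  pose proof (sq_le_of_abs_le _ _ (component_dist_le x y cI1)).
  pose proof (sq_le_of_abs_le _ _ (component_dist_le x y cI2)).
  simpl in *. lra.
Qed.

Lemma is_lim_seq_abs_sub_le (u v : nat -> R) (lu lv a : R) :
  is_lim_seq u lu -> is_lim_seq v lv ->
  (exists N, forall m, (N <= m)%nat -> Rabs (u m - a) <= v m) -> Rabs (lu - a) <= lv.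
Proof.
  intros Hu Hv [N HN].
  change (Rbar_le (Rabs (lu - a)) lv).
  apply (is_lim_seq_le (fun m => Rabs (u (m + N)%nat - a)) (fun m => v (m + N)%nat)).
  - intros m. apply HN. lia.
  - apply (is_lim_seq_continuous (fun z => Rabs (z - a))).
    + apply continuity_pt_filterlim, (continuous_comp (fun z => z - a) Rabs).
      * apply (continuous_minus (fun z => z) (fun _ => a)); [apply continuous_id|apply continuous_const].
      * apply continuous_Rabs.
    + now apply (is_lim_seq_incr_n u N lu).
  - now apply (is_lim_seq_incr_n v N lv).
Qed.

Lemma is_lim_seq_scal_l_R (u : nat -> R) (a l : R) :
  is_lim_seq u l -> is_lim_seq (fun n => a * u n) (a * l).
Proof. exact (is_lim_seq_scal_l u a l). Qed.

Definition exp_partial (y : R) (n : nat) : R := sum_n (fun j => y ^ j / INR (fact j)) n.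

Lemma is_lim_seq_exp_partial y : is_lim_seq (exp_partial y) (exp y).
Proof.
  pose proof (is_exp_Reals y) as H. unfold is_pseries, is_series in H.
  eapply filterlim_ext; [|exact H]. intros n. apply sum_n_ext. intros j.
  rewrite pow_n_pow. unfold scal; simpl. unfold mult; simpl. unfold Rdiv. ring.
Qed.

Lemma exp_partial_S y n : exp_partial y (S n) = exp_partial y n + y ^ S n / INR (fact (S n)).
Proof. unfold exp_partial. now rewrite sum_Sn. Qed.

Lemma INR_fact_pos n : 0 < INR (fact n).
Proof. apply lt_0_INR, lt_O_fact. Qed.

Lemma exp_partial_le_exp y n : 0 <= y -> exp_partial y n <= exp y.
Proof.
  intros Hy. change (Rbar_le (exp_partial y n) (exp y)).
  apply (is_lim_seq_le (fun _ => exp_partial y n) (fun m => exp_partial y (m + n))).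
  - intros m. induction m as [|m IH]; [apply Rle_refl|].
    rewrite Nat.add_succ_l, exp_partial_S.
    assert (0 <= y ^ S (m + n) / INR (fact (S (m + n)))).
    { apply Rdiv_le_0_compat; [apply pow_le; lra|apply INR_fact_pos]. }
    lra.
  - apply is_lim_seq_const.
  - now apply (is_lim_seq_incr_n (exp_partial y) n), is_lim_seq_exp_partial.
Qed.

Lemma exp_partial_cauchy y e : 0 < e ->
  exists N, forall n m, (N <= n)%nat -> (N <= m)%nat ->
    Rabs (exp_partial y m - exp_partial y n) < e.
Proof.
  intros He. pose proof (is_lim_seq_exp_partial y) as H.
  apply is_lim_seq_spec in H.
  destruct (H (mkposreal (e / 2) ltac:(lra))) as [N HN]. exists N. intros n m Hn Hm.
  pose proof (HN n Hn) as Hn'. pose proof (HN m Hm) as Hm'. simpl in Hn', Hm'.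
  apply Rabs_def2 in Hn'. apply Rabs_def2 in Hm'. apply Rabs_def1; lra.
Qed.

Lemma ex_RInt_continuous_R (h : R -> R) a b : (forall u, continuous h u) -> ex_RInt h a b.
Proof. intros Hh. apply (ex_RInt_continuous (V := R_CompleteNormedModule)). intros z _. apply Hh. Qed.

Lemma is_derive_RInt_0 (h : R -> R) t :
  (forall u, continuous h u) -> is_derive (fun t => RInt h 0 t) t (h t).
Proof.
  intros Hh. apply (is_derive_RInt h (fun t => RInt h 0 t) 0 t); [|apply Hh].
  apply filter_forall. intros b. apply (RInt_correct (V := R_CompleteNormedModule)).
  now apply ex_RInt_continuous_R.
Qed.

Lemma state_continuous_eps (Y : R -> state) t :
  (forall c, continuous (fun s => component c (Y s)) t) ->
  forall e, 0 < e -> exists d, 0 < d /\ forall s, Rabs (s - t) < d -> dist4 (Y s) (Y t) <= e.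
Proof.
  intros HY e He.
  destruct (proj1 (continuous_R_eps _ _) (HY cS) e He) as [dS [HdS HS]].
  destruct (proj1 (continuous_R_eps _ _) (HY cV) e He) as [dV [HdV HV]].
  destruct (proj1 (continuous_R_eps _ _) (HY cI1) e He) as [dI1 [HdI1 HI1]].
  destruct (proj1 (continuous_R_eps _ _) (HY cI2) e He) as [dI2 [HdI2 HI2]].
  exists (Rmin (Rmin dS dV) (Rmin dI1 dI2)). split; [repeat apply Rmin_pos; assumption|].
  intros s Hs.
  pose proof (Rmin_l (Rmin dS dV) (Rmin dI1 dI2)). pose proof (Rmin_r (Rmin dS dV) (Rmin dI1 dI2)).
  pose proof (Rmin_l dS dV). pose proof (Rmin_r dS dV).
  pose proof (Rmin_l dI1 dI2). pose proof (Rmin_r dI1 dI2).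
  apply dist4_le. intros []; left; [apply HS|apply HV|apply HI1|apply HI2]; lra.
Qed.

(* The n-th Picard increment is bounded by C0 (L t)^(n+1) / (n+1)!, a term of an
   exponential series. *)
Section Picard.

Variable g : state -> state.
Variable L : R.
Hypothesis L_pos : 0 < L.
Hypothesis g_lipschitz : forall x y, dist4 (g x) (g y) <= L * dist4 x y.
Variable x0 : state.

Fixpoint picard (n : nat) (t : R) : state :=
  match n with
  | O => x0
  | S m => of_components (fun c => component c x0 + RInt (fun u => component c (g (picard m u))) 0 t)
  end.

Lemma g_component_lipschitz x y c : Rabs (component c (g x) - component c (g y)) <= L * dist4 x y.
Proof. eapply Rle_trans; [apply component_dist_le|apply g_lipschitz]. Qed.

Lemma continuous_component_g (Y : R -> state) t :
  (forall c, continuous (fun s => component c (Y s)) t) ->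
  forall c, continuous (fun s => component c (g (Y s))) t.
Proof.
  intros HY c. apply continuous_R_eps. intros e He.
  destruct (state_continuous_eps Y t HY (e / (2 * L))) as [d [Hd Hnear]].
  { apply Rdiv_lt_0_compat; lra. }
  exists d. split; [exact Hd|]. intros s Hs.
  eapply Rle_lt_trans; [apply g_component_lipschitz|].
  apply Rle_lt_trans with (L * (e / (2 * L))); [apply Rmult_le_compat_l; [lra|auto]|].
  assert (L * (e / (2 * L)) = e / 2) by (field; lra). lra.
Qed.

Lemma picard_S_component n c t :
  component c (picard (S n) t) = component c x0 + RInt (fun u => component c (g (picard n u))) 0 t.
Proof. apply component_of_components. Qed.

Lemma picard_continuous n c t : continuous (fun s => component c (picard n s)) t.
Proof.
  revert c t. induction n as [|n IH]; intros c t; [apply continuous_const|].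
  eapply continuous_ext; [intros s; symmetry; apply picard_S_component|].
  apply (continuous_plus_R (fun _ => component c x0)); [apply continuous_const|].
  apply (ex_derive_continuous (K := R_AbsRing) (V := R_NormedModule)). eexists.
  apply is_derive_RInt_0. intros u. apply continuous_component_g. intros c'. apply IH.
Qed.

Lemma continuous_g_picard n c u : continuous (fun s => component c (g (picard n s))) u.
Proof. apply continuous_component_g. intros c'. apply picard_continuous. Qed.

Definition M0 := dist4 (g x0) (mkState 0 0 0 0).
Definition C0 := M0 / L.
Definition picard_gap (n : nat) (t : R) := C0 * (L * t) ^ S n / INR (fact (S n)).

Lemma M0_bound c : Rabs (component c (g x0)) <= M0.
Proof.
  unfold M0. pose proof (component_dist_le (g x0) (mkState 0 0 0 0) c) as H.
  destruct c; simpl in H; rewrite Rminus_0_r in H; exact H.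
Qed.

Lemma C0_nonneg : 0 <= C0.
Proof. apply Rdiv_le_0_compat; [apply dist4_nonneg|exact L_pos]. Qed.

Lemma continuous_picard_gap n t : continuous (fun u => L * picard_gap n u) t.
Proof.
  apply (ex_derive_continuous (K := R_AbsRing) (V := R_NormedModule)).
  unfold picard_gap. auto_derive. auto.
Qed.

Lemma RInt_picard_gap n t : RInt (fun u => L * picard_gap n u) 0 t = picard_gap (S n) t.
Proof.
  apply is_RInt_unique.
  replace (picard_gap (S n) t) with (minus (picard_gap (S n) t) (picard_gap (S n) 0)).
  2:{ unfold picard_gap. rewrite Rmult_0_r, pow_i by lia.
      unfold minus, plus, opp; simpl. unfold Rdiv. ring. }
  apply (is_RInt_derive (V := R_CompleteNormedModule)).
  2:{ intros x _. apply continuous_picard_gap. }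
  intros x _. unfold picard_gap.
  set (K := C0 / INR (fact (S (S n)))).
  apply (is_derive_ext (fun x => K * (L * x) ^ S (S n))); [intros u; unfold K, Rdiv; cbn; ring|].
  replace (L * (C0 * (L * x) ^ S n / INR (fact (S n))))
    with (K * (INR (S (S n)) * (L * 1) * (L * x) ^ pred (S (S n)))).
  { apply is_derive_scal, is_derive_pow, is_derive_scal, is_derive_id_R. }
  unfold K. rewrite (fact_simpl (S n)), mult_INR.
  assert (0 < INR (fact (S n))) by apply INR_fact_pos.
  assert (INR (S (S n)) <> 0) by (apply not_0_INR; lia).
  simpl pred. field. lra.
Qed.

Lemma picard_step n c t :
  0 <= t -> Rabs (component c (picard (S n) t) - component c (picard n t)) <= picard_gap n t.
Proof.
  revert c t. induction n as [|n IH]; intros c t Ht.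
  - rewrite picard_S_component. simpl picard. rewrite RInt_const.
    unfold scal; simpl; unfold mult; simpl.
    replace (component c x0 + (t - 0) * component c (g x0) - component c x0)
      with (t * component c (g x0)) by ring.
    rewrite Rabs_mult, (Rabs_right t) by lra. unfold picard_gap, C0. simpl.
    replace (M0 / L * (L * t * 1) / 1) with (t * M0) by (field; lra).
    apply Rmult_le_compat_l; [lra|apply M0_bound].
  - rewrite !picard_S_component.
    set (hS := fun u => component c (g (picard (S n) u))).
    set (hn := fun u => component c (g (picard n u))).
    assert (HexS : ex_RInt hS 0 t)
      by (apply ex_RInt_continuous_R; intros u; apply continuous_g_picard).
    assert (Hexn : ex_RInt hn 0 t)
      by (apply ex_RInt_continuous_R; intros u; apply continuous_g_picard).
    replace (component c x0 + RInt hS 0 t - (component c x0 + RInt hn 0 t))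
      with (RInt (fun u => hS u - hn u) 0 t)
      by (rewrite (RInt_minus (V := R_CompleteNormedModule)) by assumption;
          unfold minus, plus, opp; simpl; ring).
    assert (Hexd : ex_RInt (fun u => hS u - hn u) 0 t).
    { apply ex_RInt_continuous_R. intros u.
      apply (continuous_minus hS hn); apply continuous_g_picard. }
    eapply Rle_trans; [apply abs_RInt_le; [lra|exact Hexd]|].
    rewrite <- RInt_picard_gap. apply RInt_le; [lra|exact (ex_RInt_norm _ 0 t Hexd)| |].
    + apply ex_RInt_continuous_R, continuous_picard_gap.
    + intros u Hu. eapply Rle_trans; [apply g_component_lipschitz|].
      apply Rmult_le_compat_l; [lra|]. apply dist4_le. intros c'. apply IH. lra.
Qed.

Lemma picard_cauchy n m c t T :
  0 <= t <= T ->
  Rabs (component c (picard (n + m) t) - component c (picard n t))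
    <= C0 * (exp_partial (L * T) (n + m) - exp_partial (L * T) n).
Proof.
  intros Ht. induction m as [|m IH].
  - rewrite Nat.add_0_r, !Rminus_diag, Rabs_R0, Rmult_0_r. lra.
  - rewrite Nat.add_succ_r, exp_partial_S.
    assert (picard_gap (n + m) t
            <= C0 * ((L * T) ^ S (n + m) / INR (fact (S (n + m))))).
    { unfold picard_gap, Rdiv. rewrite Rmult_assoc. apply Rmult_le_compat_l; [apply C0_nonneg|].
      apply Rmult_le_compat_r; [left; apply Rinv_0_lt_compat, INR_fact_pos|].
      apply pow_incr. split; nra. }
    pose proof (picard_step (n + m) c t ltac:(lra)).
    pose proof (Rabs_triang (component c (picard (S (n + m)) t) - component c (picard (n + m) t))
                            (component c (picard (n + m) t) - component c (picard n t))).
    replace (component c (picard (S (n + m)) t) - component c (picard (n + m) t)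
             + (component c (picard (n + m) t) - component c (picard n t)))
      with (component c (picard (S (n + m)) t) - component c (picard n t)) in * by ring.
    lra.
Qed.

Definition picard_lim (c : coord) (t : R) : R := real (Lim_seq (fun n => component c (picard n t))).

Lemma is_lim_seq_picard c t : 0 <= t -> is_lim_seq (fun n => component c (picard n t)) (picard_lim c t).
Proof.
  intros Ht.
  assert (Hc : ex_lim_seq_cauchy (fun n => component c (picard n t))).
  { intros [e He]. simpl. pose proof C0_nonneg.
    destruct (exp_partial_cauchy (L * t) (e / (C0 + 1))) as [N HN];
      [apply Rdiv_lt_0_compat; lra|].
    assert (Hle : forall a b, (N <= a)%nat -> (a <= b)%nat ->
              Rabs (component c (picard b t) - component c (picard a t)) < e).
    { intros a b Ha Hab. replace b with (a + (b - a))%nat by lia.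
      eapply Rle_lt_trans; [apply (picard_cauchy a (b - a) c t t); lra|].
      pose proof (HN a (a + (b - a))%nat Ha ltac:(lia)) as Hab'.
      apply Rle_lt_trans with (C0 * (e / (C0 + 1))).
      - apply Rmult_le_compat_l; [assumption|]. eapply Rle_trans; [apply Rle_abs|lra].
      - apply Rlt_le_trans with ((C0 + 1) * (e / (C0 + 1))); [|right; field; lra].
        apply Rmult_lt_compat_r; [apply Rdiv_lt_0_compat|]; lra. }
    exists N. intros n m Hn Hm. destruct (Compare_dec.le_ge_dec n m).
    - rewrite Rabs_minus_sym. now apply Hle.
    - apply Hle; [assumption|lia]. }
  apply ex_lim_seq_cauchy_corr in Hc. destruct Hc as [l Hl].
  unfold picard_lim. rewrite (is_lim_seq_unique _ _ Hl). exact Hl.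
Qed.

Lemma picard_tail c n t T :
  0 <= t <= T ->
  Rabs (picard_lim c t - component c (picard n t)) <= C0 * (exp (L * T) - exp_partial (L * T) n).
Proof.
  intros Ht.
  apply (is_lim_seq_abs_sub_le (fun m => component c (picard m t))
           (fun m => C0 * (exp_partial (L * T) m - exp_partial (L * T) n))).
  - apply is_lim_seq_picard. lra.
  - apply is_lim_seq_scal_l_R, is_lim_seq_minus'; [apply is_lim_seq_exp_partial|apply is_lim_seq_const].
  - exists n. intros m Hm. replace m with (n + (m - n))%nat by lia. now apply picard_cauchy.
Qed.

Definition g_bound (T : R) := M0 + L * C0 * exp (L * T).

Lemma g_picard_bound n c u T : 0 <= u <= T -> Rabs (component c (g (picard n u))) <= g_bound T.
Proof.
  intros Hu. unfold g_bound.
  replace (component c (g (picard n u)))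
    with (component c (g x0) + (component c (g (picard n u)) - component c (g x0))) by ring.
  eapply Rle_trans; [apply Rabs_triang|apply Rplus_le_compat; [apply M0_bound|]].
  eapply Rle_trans; [apply g_component_lipschitz|]. rewrite Rmult_assoc.
  apply Rmult_le_compat_l; [lra|]. apply dist4_le. intros c'.
  eapply Rle_trans; [apply (picard_cauchy 0 n c' u T Hu)|]. simpl.
  pose proof (exp_partial_le_exp (L * T) n ltac:(nra)). pose proof C0_nonneg.
  assert (exp_partial (L * T) 0 = 1) by (unfold exp_partial; rewrite sum_O; simpl; field).
  nra.
Qed.

Lemma picard_time_lipschitz n c t t' T :
  0 <= t <= T -> 0 <= t' <= T ->
  Rabs (component c (picard n t) - component c (picard n t')) <= g_bound T * Rabs (t - t').
Proof.
  assert (Hle : forall a b, 0 <= b <= a -> a <= T ->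
            Rabs (component c (picard n a) - component c (picard n b)) <= g_bound T * (a - b)).
  { intros a b Hb Ha. destruct n as [|n].
    { simpl. rewrite Rminus_diag, Rabs_R0.
      apply Rmult_le_pos; [|lra]. eapply Rle_trans; [apply Rabs_pos|].
      apply (g_picard_bound 0 cS 0 T). lra. }
    rewrite !picard_S_component.
    set (h u := component c (g (picard n u))).
    assert (Hex : forall a b, ex_RInt h a b)
      by (intros a' b'; apply ex_RInt_continuous_R; intros u; apply continuous_g_picard).
    rewrite <- (RInt_Chasles (V := R_CompleteNormedModule) h 0 b a) by apply Hex.
    assert (Hcancel : forall u v w : R, w + (u + v) - (w + u) = v) by (intros; ring).
    rewrite Hcancel.
    rewrite Rmult_comm.
    apply abs_RInt_le_const; [lra|apply Hex|]. intros u Hu. apply g_picard_bound. lra. }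
  intros Ht Ht'. destruct (Rle_dec t' t).
  - rewrite (Rabs_right (t - t')) by lra. apply Hle; lra.
  - rewrite Rabs_minus_sym, (Rabs_left (t - t')) by lra.
    replace (- (t - t')) with (t' - t) by ring. apply Hle; lra.
Qed.

Lemma picard_lim_time_lipschitz c t t' T :
  0 <= t <= T -> 0 <= t' <= T ->
  Rabs (picard_lim c t - picard_lim c t') <= g_bound T * Rabs (t - t').
Proof.
  intros Ht Ht'. rewrite <- (Rminus_0_r (picard_lim c t - picard_lim c t')).
  apply (is_lim_seq_abs_sub_le (fun m => component c (picard m t) - component c (picard m t'))
           (fun _ => g_bound T * Rabs (t - t'))).
  - apply is_lim_seq_minus'; apply is_lim_seq_picard; lra.
  - apply is_lim_seq_const.
  - exists O. intros m _. rewrite Rminus_0_r. now apply picard_time_lipschitz.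
Qed.

(* The limit is extended to negative times by its value at 0, so that it is
   continuous on all of R and Coquelicot's integration lemmas apply directly. *)
Definition picard_sol (t : R) : state := of_components (fun c => picard_lim c (Rmax 0 t)).

Lemma picard_sol_component c u : 0 <= u -> component c (picard_sol u) = picard_lim c u.
Proof. intros Hu. unfold picard_sol. now rewrite component_of_components, Rmax_right. Qed.

Lemma picard_sol_continuous c t : continuous (fun s => component c (picard_sol s)) t.
Proof.
  apply continuous_R_eps. intros e He. unfold picard_sol.
  set (T := Rabs t + 1). set (B := g_bound T).
  assert (HB : 0 <= B).
  { eapply Rle_trans; [apply Rabs_pos|]. apply (g_picard_bound 0 cS 0 T). unfold T.
    pose proof (Rabs_pos t). lra. }
  exists (Rmin 1 (e / (B + 1))). split; [apply Rmin_pos; [lra|apply Rdiv_lt_0_compat; lra]|].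
  intros y Hy. rewrite !component_of_components.
  assert (Hy1 : Rabs (y - t) < 1) by (eapply Rlt_le_trans; [exact Hy|apply Rmin_l]).
  assert (Hy2 : Rabs (y - t) < e / (B + 1)) by (eapply Rlt_le_trans; [exact Hy|apply Rmin_r]).
  assert (Hmax : Rabs (Rmax 0 y - Rmax 0 t) <= Rabs (y - t))
    by (unfold Rmax; destruct (Rle_dec 0 y), (Rle_dec 0 t); split_Rabs; lra).
  eapply Rle_lt_trans; [apply (picard_lim_time_lipschitz c _ _ T)|].
  1, 2: unfold T, Rmax; repeat destruct Rle_dec; split_Rabs; lra.
  apply Rle_lt_trans with (B * (e / (B + 1))).
  - apply Rmult_le_compat_l; lra.
  - apply Rlt_le_trans with ((B + 1) * (e / (B + 1))); [|right; field; lra].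
    apply Rmult_lt_compat_r; [apply Rdiv_lt_0_compat|]; lra.
Qed.

Lemma continuous_g_picard_sol c u : continuous (fun s => component c (g (picard_sol s))) u.
Proof. apply continuous_component_g. intros c'. apply picard_sol_continuous. Qed.

Lemma picard_lim_integral c t :
  0 <= t -> picard_lim c t = component c x0 + RInt (fun u => component c (g (picard_sol u))) 0 t.
Proof.
  intros Ht.
  set (h := fun u => component c (g (picard_sol u))).
  assert (Hexh : ex_RInt h 0 t) by (apply ex_RInt_continuous_R, continuous_g_picard_sol).
  assert (Hbound : Rabs (picard_lim c t - (component c x0 + RInt h 0 t))
                   <= t * (L * (C0 * (exp (L * t) - exp (L * t))))).
  { apply (is_lim_seq_abs_sub_le (fun n => component c (picard (S n) t))
             (fun n => t * (L * (C0 * (exp (L * t) - exp_partial (L * t) n))))).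
    - apply (is_lim_seq_incr_1 (fun n => component c (picard n t))), is_lim_seq_picard. lra.
    - do 3 apply is_lim_seq_scal_l_R.
      apply is_lim_seq_minus'; [apply is_lim_seq_const|apply is_lim_seq_exp_partial].
    - exists O. intros n _. rewrite picard_S_component.
      set (hn := fun u => component c (g (picard n u))).
      assert (Hexn : ex_RInt hn 0 t)
        by (apply ex_RInt_continuous_R; intros u; apply continuous_g_picard).
      replace (component c x0 + RInt hn 0 t - (component c x0 + RInt h 0 t))
        with (RInt (fun u => hn u - h u) 0 t)
        by (rewrite (RInt_minus (V := R_CompleteNormedModule)) by assumption;
            unfold minus, plus, opp; simpl; ring).
      match goal with |- _ <= t * ?X => replace (t * X) with ((t - 0) * X) by ring end.
      apply abs_RInt_le_const; [lra| |].
      + apply ex_RInt_continuous_R. intros u.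
        apply (continuous_minus hn h); [apply continuous_g_picard|apply continuous_g_picard_sol].
      + intros u Hu. eapply Rle_trans; [apply g_component_lipschitz|].
        apply Rmult_le_compat_l; [lra|]. apply dist4_le. intros c'.
        rewrite picard_sol_component by lra. rewrite Rabs_minus_sym. apply picard_tail. lra. }
  rewrite Rminus_diag, !Rmult_0_r in Hbound.
  pose proof (Rabs_pos (picard_lim c t - (component c x0 + RInt h 0 t))).
  assert (Habs : Rabs (picard_lim c t - (component c x0 + RInt h 0 t)) = 0) by lra.
  apply Rabs_eq_0 in Habs. lra.
Qed.

Lemma picard_sol_spec :
  picard_sol 0 = x0 /\
  (forall t c, 0 < t ->
     is_derive (fun s => component c (picard_sol s)) t (component c (g (picard_sol t)))) /\
  (forall c t, continuous (fun s => component c (picard_sol s)) t).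
Proof.
  split; [|split; [|exact picard_sol_continuous]].
  - rewrite <- (of_components_component x0). unfold picard_sol. f_equal.
    apply functional_extensionality. intros c.
    rewrite Rmax_left, picard_lim_integral, RInt_point by lra.
    unfold zero; simpl. ring.
  - intros t c Ht.
    apply (is_derive_ext_loc
             (fun s => component c x0 + RInt (fun u => component c (g (picard_sol u))) 0 s)).
    { exists (mkposreal t Ht). intros s Hs. change (Rabs (s - t) < t) in Hs. apply Rabs_def2 in Hs.
      rewrite picard_sol_component, picard_lim_integral by lra. reflexivity. }
    rewrite <- (Rplus_0_l (component c (g (picard_sol t)))).
    apply (is_derive_plus_R (fun _ => component c x0)); [apply is_derive_const_R|].
    apply is_derive_RInt_0, continuous_g_picard_sol.
Qed.

End Picard.

Lemma uniform_bound_on_interval (a b : R) (P : R -> R -> Prop) :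
  (forall x B B', B <= B' -> P x B -> P x B') ->
  (forall x, a <= x <= b -> exists eta, 0 < eta /\
     exists B, forall x', a <= x' <= b -> Rabs (x' - x) < eta -> P x' B) ->
  a <= b -> exists B, forall x, a <= x <= b -> P x B.
Proof.
  intros Hmono Hloc Hab.
  set (A := fun x => a <= x <= b /\ exists B, forall x', a <= x' <= x -> P x' B).
  assert (HA : A a).
  { split; [lra|]. destruct (Hloc a ltac:(lra)) as [eta [Heta [B HB]]]. exists B.
    intros x' Hx'. apply HB; [lra|]. replace (x' - a) with 0 by lra. rewrite Rabs_R0. lra. }
  destruct (completeness A) as [m Hm]; [exists b; intros x [Hx _]; lra|exists a; exact HA|].
  pose proof Hm as [Hub Hlub].
  assert (Ham : a <= m) by (apply Hub, HA).
  assert (Hmb : m <= b) by (apply Hlub; intros x [Hx _]; lra).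
  destruct (Hloc m ltac:(lra)) as [eta [Heta [Bm HBm]]].
  destruct (is_lub_approx A m Hm eta Heta) as [x [[Hx [Bx HBx]] Hxm]].
  assert (Hxm' : x <= m) by (apply Hub; split; [assumption|exists Bx; assumption]).
  set (m' := Rmin (m + eta / 2) b).
  assert (Hm' : A m').
  { split; [unfold m'; split; [apply Rmin_glb; lra|apply Rmin_r]|].
    exists (Rmax Bx Bm). intros x' Hx'.
    assert (x' <= m + eta / 2) by (apply Rle_trans with m'; [lra|apply Rmin_l]).
    destruct (Rle_or_lt x' x).
    - apply Hmono with Bx; [apply Rmax_l|]. apply HBx. lra.
    - apply Hmono with Bm; [apply Rmax_r|]. apply HBm.
      + split; [lra|]. apply Rle_trans with m'; [lra|apply Rmin_r].
      + apply Rabs_def1; lra. }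
  assert (m' <= m) by (apply Hub, Hm').
  assert (Hm'b : m' = b) by (unfold m' in *; unfold Rmin in *; destruct Rle_dec; lra).
  destruct Hm' as [_ [B HB]]. exists B. intros x' Hx'. apply HB. lra.
Qed.

Lemma bounded_on_rectangle (g : R -> R -> R) :
  (forall x y, continuous (fun p : R * R => g (fst p) (snd p)) (x, y)) ->
  forall a b c d, a <= b -> c <= d ->
  exists B, forall x y, a <= x <= b -> c <= y <= d -> Rabs (g x y) <= B.
Proof.
  intros Hg a b c d Hab Hcd.
  (* One parameter B plays both the bound and the inverse radius of the strip,
     which makes the property monotone in B. *)
  assert (Hstrip : forall x0, exists B, 0 < B /\ forall y, c <= y <= d ->
            forall x', Rabs (x' - x0) < / B -> Rabs (g x' y) <= B).
  { intros x0.
    destruct (uniform_bound_on_interval c d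
      (fun y B => 0 < B /\ forall x', Rabs (x' - x0) < / B -> Rabs (g x' y) <= B))
      as [B HB]; [| |exact Hcd|].
    - intros y B B' HBB' [HB0 HB]. split; [lra|]. intros x' Hx'.
      apply Rle_trans with B; [|exact HBB']. apply HB.
      eapply Rlt_le_trans; [exact Hx'|]. apply Rinv_le_contravar; lra.
    - intros y0 Hy0.
      destruct (continuous_R2_eps g x0 y0 (Hg x0 y0) 1 Rlt_0_1) as [e [He Hnear]].
      exists e. split; [exact He|]. exists (Rmax (Rabs (g x0 y0) + 1) (/ e)).
      intros y' _ Hy'. split; [eapply Rlt_le_trans; [apply Rinv_0_lt_compat, He|apply Rmax_r]|].
      intros x' Hx'.
      assert (Hx'' : Rabs (x' - x0) < e).
      { eapply Rlt_le_trans; [exact Hx'|]. rewrite <- (Rinv_inv e) at 2.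
        apply Rinv_le_contravar; [apply Rinv_0_lt_compat; lra|apply Rmax_r]. }
      pose proof (Hnear x' y' Hx'' Hy'). pose proof (Rabs_triang_inv (g x' y') (g x0 y0)).
      eapply Rle_trans; [|apply Rmax_l]. lra.
    - destruct (HB c ltac:(lra)) as [HB0 _]. exists B. split; [exact HB0|].
      intros y Hy. now apply HB. }
  destruct (uniform_bound_on_interval a b
    (fun x B => forall y, c <= y <= d -> Rabs (g x y) <= B)) as [B HB]; [| |exact Hab|].
  - intros x B B' HBB' H y Hy. apply Rle_trans with B; [now apply H|exact HBB'].
  - intros x0 _. destruct (Hstrip x0) as [B [HB0 HB]].
    exists (/ B). split; [now apply Rinv_0_lt_compat|].
    exists B. intros x' _ Hx' y Hy. now apply HB.
  - exists B. intros x y Hx Hy. now apply HB.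
Qed.

Section C2Facts.

Variable F : R -> R -> R.
Hypothesis HF : C2_R2 F.

Lemma C2_is_derive_d1 x y : is_derive (fun u => F u y) x (d1 F x y).
Proof. apply Derive_correct, (proj1 (proj1 HF x y)). Qed.

Lemma C2_is_derive_d2 x y : is_derive (fun v => F x v) y (d2 F x y).
Proof. apply Derive_correct, (proj2 (proj1 HF x y)). Qed.

Lemma C2_continuous x y : continuous (fun p : R * R => F (fst p) (snd p)) (x, y).
Proof. apply (proj2 (proj2 HF) x y). Qed.

Lemma C2_continuous_d1 x y : continuous (fun p : R * R => d1 F (fst p) (snd p)) (x, y).
Proof. apply (proj2 (proj2 HF) x y). Qed.

Lemma C2_continuous_d2 x y : continuous (fun p : R * R => d2 F (fst p) (snd p)) (x, y).
Proof. apply (proj2 (proj2 HF) x y). Qed.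

Lemma continuity_pt_of_is_derive (h : R -> R) x l : is_derive h x l -> continuity_pt h x.
Proof.
  intros Hh. apply continuity_pt_filterlim.
  apply (ex_derive_continuous (K := R_AbsRing) (V := R_NormedModule)). now exists l.
Qed.

Lemma C2_MVT_d1 x x' y :
  exists c, Rmin x x' <= c <= Rmax x x' /\ F x' y - F x y = d1 F c y * (x' - x).
Proof.
  apply (MVT_gen (fun u => F u y) x x' (fun u => d1 F u y)); intros u _.
  - apply C2_is_derive_d1.
  - eapply continuity_pt_of_is_derive, C2_is_derive_d1.
Qed.

Lemma C2_MVT_d2 x y y' :
  exists c, Rmin y y' <= c <= Rmax y y' /\ F x y' - F x y = d2 F x c * (y' - y).
Proof.
  apply (MVT_gen (fun v => F x v) y y' (fun v => d2 F x v)); intros u _.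
  - apply C2_is_derive_d2.
  - eapply continuity_pt_of_is_derive, C2_is_derive_d2.
Qed.

Lemma C2_lipschitz_on_box M : 0 <= M -> exists K, 0 <= K /\
  forall x y x' y', 0 <= x <= M -> 0 <= y <= M -> 0 <= x' <= M -> 0 <= y' <= M ->
  Rabs (F x y - F x' y') <= K * (Rabs (x - x') + Rabs (y - y')).
Proof.
  intros HM.
  destruct (bounded_on_rectangle (d1 F) C2_continuous_d1 0 M 0 M HM HM) as [B1 HB1].
  destruct (bounded_on_rectangle (d2 F) C2_continuous_d2 0 M 0 M HM HM) as [B2 HB2].
  exists (Rmax B1 B2). split.
  { eapply Rle_trans; [|apply Rmax_l]. eapply Rle_trans; [apply Rabs_pos|]. apply (HB1 0 0); lra. }
  intros x y x' y' Hx Hy Hx' Hy'.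
  destruct (C2_MVT_d1 x' x y) as [c1 [Hc1 E1]].
  destruct (C2_MVT_d2 x' y' y) as [c2 [Hc2 E2]].
  assert (Hbetween : forall u v w, 0 <= u <= M -> 0 <= v <= M -> Rmin u v <= w <= Rmax u v -> 0 <= w <= M)
    by (intros u v w; unfold Rmin, Rmax; destruct Rle_dec; lra).
  replace (F x y - F x' y') with ((F x y - F x' y) + (F x' y - F x' y')) by ring.
  rewrite E1, E2. eapply Rle_trans; [apply Rabs_triang|]. rewrite !Rabs_mult.
  pose proof (HB1 c1 y (Hbetween _ _ _ Hx' Hx Hc1) Hy).
  pose proof (HB2 x' c2 Hx' (Hbetween _ _ _ Hy' Hy Hc2)).
  pose proof (Rmax_l B1 B2). pose proof (Rmax_r B1 B2).
  pose proof (Rabs_pos (x - x')). pose proof (Rabs_pos (y - y')).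
  nra.
Qed.

Lemma C2_linearization x0 y0 eps : 0 < eps -> exists rho, 0 < rho /\
  forall x y, Rabs (x - x0) < rho -> Rabs (y - y0) < rho ->
  Rabs (F x y - F x0 y0 - d1 F x0 y0 * (x - x0) - d2 F x0 y0 * (y - y0))
    <= eps * (Rabs (x - x0) + Rabs (y - y0)).
Proof.
  intros He.
  destruct (continuous_R2_eps _ x0 y0 (C2_continuous_d1 x0 y0) eps He) as [r1 [Hr1 H1]].
  destruct (continuous_R2_eps _ x0 y0 (C2_continuous_d2 x0 y0) eps He) as [r2 [Hr2 H2]].
  exists (Rmin r1 r2). split; [now apply Rmin_pos|].
  intros x y Hx Hy.
  pose proof (Rmin_l r1 r2). pose proof (Rmin_r r1 r2).
  destruct (C2_MVT_d1 x0 x y) as [c1 [Hc1 E1]].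
  destruct (C2_MVT_d2 x0 y0 y) as [c2 [Hc2 E2]].
  assert (Hc1' : Rabs (c1 - x0) < r1).
  { apply Rle_lt_trans with (Rabs (x - x0)); [|lra].
    unfold Rmin, Rmax in Hc1. destruct Rle_dec; split_Rabs; lra. }
  assert (Hc2' : Rabs (c2 - y0) < r2).
  { apply Rle_lt_trans with (Rabs (y - y0)); [|lra].
    unfold Rmin, Rmax in Hc2. destruct Rle_dec; split_Rabs; lra. }
  specialize (H1 c1 y Hc1' ltac:(lra)).
  specialize (H2 x0 c2 ltac:(rewrite Rminus_diag, Rabs_R0; lra) Hc2').
  replace (F x y - F x0 y0 - d1 F x0 y0 * (x - x0) - d2 F x0 y0 * (y - y0))
    with ((F x y - F x0 y) - d1 F x0 y0 * (x - x0) + ((F x0 y - F x0 y0) - d2 F x0 y0 * (y - y0)))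
    by ring.
  rewrite E1, E2.
  rewrite <- !Rmult_minus_distr_r.
  eapply Rle_trans; [apply Rabs_triang|]. rewrite !Rabs_mult.
  pose proof (Rabs_pos (x - x0)). pose proof (Rabs_pos (y - y0)).
  rewrite Rmult_plus_distr_l. apply Rplus_le_compat; apply Rmult_le_compat_r; lra.
Qed.

End C2Facts.

Lemma is_derive_zero_of_vanishing_right (h : R -> R) x D :
  is_derive h x D -> (forall y, x <= y -> h y = 0) -> D = 0.
Proof.
  intros Hd Hzero. apply is_derive_Reals in Hd.
  destruct (Req_dec D 0) as [|HD]; [assumption|exfalso].
  destruct (Hd (Rabs D) (Rabs_pos_lt D HD)) as [[e He] Hnear].
  specialize (Hnear (e / 2) ltac:(simpl; lra) ltac:(simpl; rewrite Rabs_right; lra)).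
  rewrite !Hzero in Hnear by (simpl; lra).
  replace ((0 - 0) / (e / 2) - D) with (- D) in Hnear by (field; lra).
  rewrite Rabs_Ropp in Hnear. lra.
Qed.

Section Incidence.

Variables F f : R -> R -> R.
Hypothesis Hinc : incidence_hyp F f.

Lemma incidence_C2 : C2_R2 F.
Proof. apply Hinc. Qed.

Lemma incidence_factor S I : 0 <= S -> 0 <= I -> F S I = I * f S I.
Proof. apply Hinc. Qed.

Lemma incidence_S0 I : 0 <= I -> F 0 I = 0.
Proof. apply Hinc. Qed.

Lemma incidence_I0 S : 0 <= S -> F S 0 = 0.
Proof. apply Hinc. Qed.

Lemma locally_pos (x : R) (P : R -> Prop) : 0 < x -> (forall u, 0 < u -> P u) -> locally x P.
Proof.
  intros Hx HP. exists (mkposreal x Hx). intros u Hu. change (Rabs (u - x) < x) in Hu.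
  apply HP. apply Rabs_def2 in Hu. lra.
Qed.

Lemma incidence_d1_pos S I : 0 < S -> 0 < I -> 0 < d1 F S I.
Proof.
  intros HS HI. destruct Hinc as [_ [Hf [_ [_ [_ [_ [Hmon _]]]]]]].
  assert (Hder : is_derive (fun u => F u I) S (I * d1 f S I)).
  { apply (is_derive_ext_loc (fun u => I * f u I)).
    - apply locally_pos; [exact HS|]. intros u Hu. rewrite incidence_factor by lra. reflexivity.
    - apply is_derive_scal, C2_is_derive_d1, Hf. }
  replace (d1 F S I) with (I * d1 f S I) by (symmetry; apply is_derive_unique, Hder).
  destruct (Hmon S I ltac:(lra) ltac:(lra)) as [Hpos _]. now apply Rmult_lt_0_compat.
Qed.

Lemma incidence_d2_le S I : 0 <= S -> 0 < I -> d2 F S I <= f S I.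
Proof.
  intros HS HI. destruct Hinc as [_ [Hf [_ [_ [_ [_ [Hmon _]]]]]]].
  assert (Hder : is_derive (fun v => F S v) I (1 * f S I + I * d2 f S I)).
  { apply (is_derive_ext_loc (fun v => v * f S v)).
    - apply locally_pos; [exact HI|]. intros u Hu. rewrite incidence_factor by lra. reflexivity.
    - apply (is_derive_mult_R (fun v => v) (fun v => f S v));
        [apply is_derive_id_R|apply C2_is_derive_d2, Hf]. }
  replace (d2 F S I) with (1 * f S I + I * d2 f S I)
    by (symmetry; apply is_derive_unique, Hder).
  destruct (Hmon S I HS ltac:(lra)) as [_ Hneg].
  assert (0 <= I * - d2 f S I) by (apply Rmult_le_pos; lra). lra.
Qed.

Lemma incidence_d1_at_I0 S : 0 < S -> d1 F S 0 = 0.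
Proof.
  intros HS. unfold d1. apply is_derive_unique.
  apply (is_derive_ext_loc (fun _ => 0)); [|apply is_derive_const_R].
  apply locally_pos; [exact HS|]. intros u Hu. now rewrite incidence_I0 by lra.
Qed.

(* F = I f is only assumed for I >= 0, so the derivative at I = 0 is read off from
   the right. *)
Lemma incidence_d2_at_I0 S : 0 <= S -> d2 F S 0 = f S 0.
Proof.
  intros HS. destruct Hinc as [HF [Hf _]].
  assert (Hder : is_derive (fun v => F S v - v * f S v) 0
                   (d2 F S 0 - (1 * f S 0 + 0 * d2 f S 0))).
  { apply (is_derive_minus_R (fun v => F S v)); [apply C2_is_derive_d2, HF|].
    apply (is_derive_mult_R (fun v => v) (fun v => f S v));
      [apply is_derive_id_R|apply C2_is_derive_d2, Hf]. }
  apply is_derive_zero_of_vanishing_right in Hder; [lra|].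
  intros y Hy. rewrite incidence_factor by lra. ring.
Qed.

End Incidence.

Definition clamp (M x : R) := Rmin (Rmax x 0) M.
Definition clamp_state (M : R) (x : state) := of_components (fun c => clamp M (component c x)).

Lemma clamp_range M x : 0 <= M -> 0 <= clamp M x <= M.
Proof. intros. unfold clamp, Rmin, Rmax. repeat destruct Rle_dec; lra. Qed.

Lemma clamp_lipschitz M x y : 0 <= M -> Rabs (clamp M x - clamp M y) <= Rabs (x - y).
Proof. intros. unfold clamp, Rmin, Rmax. repeat destruct Rle_dec; split_Rabs; lra. Qed.

Lemma clamp_neg M x : 0 <= M -> x < 0 -> clamp M x = 0.
Proof. intros. unfold clamp, Rmin, Rmax. repeat destruct Rle_dec; lra. Qed.

Lemma clamp_id M x : 0 <= x <= M -> clamp M x = x.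
Proof. intros. unfold clamp, Rmin, Rmax. repeat destruct Rle_dec; lra. Qed.

Lemma clamp_sum_ge M a b c d : 0 <= M -> 0 <= a -> 0 <= b -> 0 <= c -> 0 <= d ->
  Rmin (a + b + c + d) M <= clamp M a + clamp M b + clamp M c + clamp M d.
Proof. intros. unfold clamp, Rmin, Rmax. repeat destruct Rle_dec; lra. Qed.

Lemma mult_lipschitz_on_box M a b a' b' :
  0 <= a <= M -> 0 <= b <= M -> 0 <= a' <= M -> 0 <= b' <= M ->
  Rabs (a * b - a' * b') <= M * (Rabs (a - a') + Rabs (b - b')).
Proof.
  intros. replace (a * b - a' * b') with (a * (b - b') + b' * (a - a')) by ring.
  eapply Rle_trans; [apply Rabs_triang|]. rewrite !Rabs_mult, (Rabs_right a), (Rabs_right b') by lra.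
  pose proof (Rabs_pos (a - a')). pose proof (Rabs_pos (b - b')). nra.
Qed.

Lemma params_ok_rates p : params_ok p -> 0 < lam p /\ 0 < alpha1 p /\ 0 < alpha2 p.
Proof.
  intros [_ [Hmu [Hr [_ [Hg1 [Hg2 [Hv1 Hv2]]]]]]]. unfold lam, alpha1, alpha2. lra.
Qed.

(* Outside the box [0, M]^4 the field is frozen at its value on the box: this makes it
   globally Lipschitz, and the box (intersected with S + V + I1 + I2 <= K0) is invariant,
   so the solution of the clamped system solves the model. *)
Section ClampedField.

Variables (p : params) (F1 f1 F2 f2 : R -> R -> R).
Hypothesis Hp : params_ok p.
Hypothesis H1 : incidence_hyp F1 f1.
Hypothesis H2 : incidence_hyp F2 f2.
Variable M : R.
Hypothesis HM : 0 <= M.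

Definition clamped_field (x : state) := field p F1 F2 (clamp_state M x).

Lemma clamped_field_lipschitz :
  exists L, 0 < L /\ forall x y, dist4 (clamped_field x) (clamped_field y) <= L * dist4 x y.
Proof.
  destruct (C2_lipschitz_on_box F1 (incidence_C2 F1 f1 H1) M HM) as [K1 [HK1 HL1]].
  destruct (C2_lipschitz_on_box F2 (incidence_C2 F2 f2 H2) M HM) as [K2 [HK2 HL2]].
  pose proof (params_ok_rates p Hp) as [Hlam [Ha1 Ha2]].
  destruct Hp as [_ [Hmu [Hr [Hk _]]]].
  assert (HkM : 0 <= k p * M) by nra.
  set (L := 2 * K1 + 2 * K2 + lam p + r p + mu p + 2 * k p * M + alpha1 p + alpha2 p + 1).
  exists L. split; [unfold L; lra|].
  intros x y. set (d := dist4 x y). assert (Hd : 0 <= d) by apply dist4_nonneg.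
  assert (Hc : forall c, 0 <= clamp M (component c x) <= M /\ 0 <= clamp M (component c y) <= M /\
                 Rabs (clamp M (component c x) - clamp M (component c y)) <= d).
  { intros c. split; [now apply clamp_range|split; [now apply clamp_range|]].
    eapply Rle_trans; [now apply clamp_lipschitz|apply component_dist_le]. }
  destruct (Hc cS) as [hs1 [hs2 hs]]. destruct (Hc cV) as [hv1 [hv2 hv]].
  destruct (Hc cI1) as [ha1 [ha2 ha]]. destruct (Hc cI2) as [hb1 [hb2 hb]].
  unfold clamped_field, clamp_state, field, of_components. simpl component in *.
  set (s1 := clamp M (sS x)) in *. set (s2 := clamp M (sS y)) in *.
  set (w1 := clamp M (sV x)) in *. set (w2 := clamp M (sV y)) in *.
  set (a1 := clamp M (sI1 x)) in *. set (a2 := clamp M (sI1 y)) in *.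
  set (b1 := clamp M (sI2 x)) in *. set (b2 := clamp M (sI2 y)) in *.
  pose proof (HL1 s1 a1 s2 a2 hs1 ha1 hs2 ha2) as E1.
  pose proof (HL2 s1 b1 s2 b2 hs1 hb1 hs2 hb2) as E2.
  pose proof (mult_lipschitz_on_box M b1 w1 b2 w2 hb1 hv1 hb2 hv2) as E3.
  assert (EE1 : Rabs (F1 s1 a1 - F1 s2 a2) <= 2 * K1 * d) by nra.
  assert (EE2 : Rabs (F2 s1 b1 - F2 s2 b2) <= 2 * K2 * d) by nra.
  assert (EE3 : Rabs (b1 * w1 - b2 * w2) <= 2 * M * d) by nra.
  apply Rabs_le_between in hs, hv, ha, hb, EE1, EE2, EE3.
  assert (2 * K1 * d + 2 * K2 * d + lam p * d + r p * d + mu p * d + k p * (2 * M * d)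
          + alpha1 p * d + alpha2 p * d <= L * d) by (unfold L; nra).
  apply dist4_le. intros []; simpl; apply Rabs_le; split; nra.
Qed.

Lemma clamped_field_inward x c : component c x < 0 -> 0 <= component c (clamped_field x).
Proof.
  destruct Hp as [HLam [Hmu [Hr _]]]. intros Hx.
  unfold clamped_field, clamp_state, field, of_components.
  destruct c; simpl in *; rewrite (clamp_neg M _ HM Hx).
  - rewrite (incidence_S0 F1 f1 H1), (incidence_S0 F2 f2 H2) by now apply clamp_range. lra.
  - pose proof (clamp_range M (sS x) HM). rewrite Rmult_0_r, Rminus_0_r. apply Rmult_le_pos; lra.
  - rewrite (incidence_I0 F1 f1 H1) by now apply clamp_range. lra.
  - rewrite (incidence_I0 F2 f2 H2) by now apply clamp_range. lra.
Qed.

Lemma clamped_field_total x :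
  sS (clamped_field x) + sV (clamped_field x) + sI1 (clamped_field x) + sI2 (clamped_field x) =
  Lam p - mu p * clamp M (sS x) - mu p * clamp M (sV x) - alpha1 p * clamp M (sI1 x)
  - alpha2 p * clamp M (sI2 x).
Proof. unfold clamped_field, clamp_state, field, of_components, lam. simpl. ring. Qed.

Lemma clamped_total_decreasing x K0 :
  nonneg_state x -> Lam p / mu p <= K0 -> K0 < M ->
  K0 < sS x + sV x + sI1 x + sI2 x ->
  sS (clamped_field x) + sV (clamped_field x) + sI1 (clamped_field x) + sI2 (clamped_field x) <= 0.
Proof.
  intros [HxS [HxV [HxI1 HxI2]]] HK0 HKM Hgt. rewrite clamped_field_total.
  destruct Hp as [HLam [Hmu [_ [_ [Hg1 [Hg2 [Hv1 Hv2]]]]]]].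
  pose proof (clamp_sum_ge M _ _ _ _ HM HxS HxV HxI1 HxI2) as Hsum.
  assert (Hmin : K0 < Rmin (sS x + sV x + sI1 x + sI2 x) M) by (apply Rmin_glb_lt; lra).
  assert (Lam p <= mu p * K0).
  { replace (Lam p) with (mu p * (Lam p / mu p)) by (field; lra). apply Rmult_le_compat_l; lra. }
  pose proof (clamp_range M (sI1 x) HM). pose proof (clamp_range M (sI2 x) HM).
  assert (mu p * clamp M (sI1 x) <= alpha1 p * clamp M (sI1 x))
    by (apply Rmult_le_compat_r; [lra|unfold alpha1; lra]).
  assert (mu p * clamp M (sI2 x) <= alpha2 p * clamp M (sI2 x))
    by (apply Rmult_le_compat_r; [lra|unfold alpha2; lra]).
  assert (mu p * K0 < mu p * (clamp M (sS x) + clamp M (sV x) + clamp M (sI1 x) + clamp M (sI2 x)))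
    by (apply Rmult_lt_compat_l; lra).
  lra.
Qed.

Variable x0 : state.
Hypothesis Hx0 : nonneg_state x0.
Variable K0 : R.
Hypothesis HN0 : sS x0 + sV x0 + sI1 x0 + sI2 x0 <= K0.
Hypothesis HK0 : Lam p / mu p <= K0.
Hypothesis HKM : K0 < M.

Let Y := picard_sol clamped_field x0.

Lemma clamped_sol_spec :
  Y 0 = x0 /\
  (forall t c, 0 < t -> is_derive (fun s => component c (Y s)) t (component c (clamped_field (Y t)))) /\
  (forall c t, continuous (fun s => component c (Y s)) t).
Proof.
  destruct clamped_field_lipschitz as [L [HL Hlip]]. exact (picard_sol_spec clamped_field L HL Hlip x0).
Qed.

Lemma clamped_sol_nonneg t : 0 <= t -> nonneg_state (Y t).
Proof.
  intros Ht. destruct clamped_sol_spec as [HY0 [HYd HYc]].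
  assert (Hnn : forall c, 0 <= component c (Y t)).
  { intros c. revert t Ht. apply (lower_barrier _ (fun t => component c (clamped_field (Y t)))).
    - intros t Ht. now apply HYd.
    - apply continuous_at_right, HYc.
    - rewrite HY0. destruct Hx0 as (? & ? & ? & ?). destruct c; simpl; lra.
    - intros t _ Hneg. now apply clamped_field_inward. }
  exact (conj (Hnn cS) (conj (Hnn cV) (conj (Hnn cI1) (Hnn cI2)))).
Qed.

Lemma clamped_sol_total t : 0 <= t -> sS (Y t) + sV (Y t) + sI1 (Y t) + sI2 (Y t) <= K0.
Proof.
  destruct clamped_sol_spec as [HY0 [HYd HYc]]. revert t.
  apply (upper_barrier (fun t => sS (Y t) + sV (Y t) + sI1 (Y t) + sI2 (Y t))
           (fun t => sS (clamped_field (Y t)) + sV (clamped_field (Y t))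
                     + sI1 (clamped_field (Y t)) + sI2 (clamped_field (Y t)))).
  - intros t Ht.
    apply is_derive_plus_R; [apply is_derive_plus_R; [apply is_derive_plus_R|]|];
      [exact (HYd t cS Ht)|exact (HYd t cV Ht)|exact (HYd t cI1 Ht)|exact (HYd t cI2 Ht)].
  - apply (continuous_at_right (fun t => sS (Y t) + sV (Y t) + sI1 (Y t) + sI2 (Y t))).
    apply continuous_plus_R; [apply continuous_plus_R; [apply continuous_plus_R|]|];
      [exact (HYc cS 0)|exact (HYc cV 0)|exact (HYc cI1 0)|exact (HYc cI2 0)].
  - now rewrite HY0.
  - intros t Ht Hgt.
    apply (clamped_total_decreasing _ K0); [apply clamped_sol_nonneg; lra|lra|lra|exact Hgt].
Qed.

Lemma clamped_sol_unclamped t : 0 <= t -> clamped_field (Y t) = field p F1 F2 (Y t).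
Proof.
  intros Ht. unfold clamped_field. f_equal.
  transitivity (of_components (fun c => component c (Y t))); [|apply of_components_component].
  unfold clamp_state. f_equal. apply functional_extensionality. intros c. apply clamp_id.
  pose proof (clamped_sol_total t Ht). pose proof (clamped_sol_nonneg t Ht) as (? & ? & ? & ?).
  destruct c; cbn [component]; lra.
Qed.

Lemma clamped_sol_is_solution : is_solution p F1 F2 Y.
Proof.
  destruct clamped_sol_spec as [_ [HYd HYc]].
  split; [|exact (conj (continuous_at_right _ _ (HYc cS 0)) (conj (continuous_at_right _ _ (HYc cV 0))
                  (conj (continuous_at_right _ _ (HYc cI1 0)) (continuous_at_right _ _ (HYc cI2 0)))))].
  intros t Ht. rewrite <- clamped_sol_unclamped by lra.
  exact (conj (HYd t cS Ht) (conj (HYd t cV Ht) (conj (HYd t cI1 Ht) (HYd t cI2 Ht)))).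
Qed.

End ClampedField.

Lemma exists_nonneg_solution p F1 f1 F2 f2 :
  params_ok p -> incidence_hyp F1 f1 -> incidence_hyp F2 f2 ->
  forall x0, nonneg_state x0 ->
  exists X, is_solution p F1 F2 X /\ X 0 = x0 /\ forall t, 0 <= t -> nonneg_state (X t).
Proof.
  intros Hp H1 H2 x0 Hx0.
  set (K0 := Rmax (sS x0 + sV x0 + sI1 x0 + sI2 x0) (Lam p / mu p)).
  assert (HN0 : sS x0 + sV x0 + sI1 x0 + sI2 x0 <= K0) by apply Rmax_l.
  assert (HK0 : Lam p / mu p <= K0) by apply Rmax_r.
  assert (HM : 0 <= K0 + 1) by (destruct Hx0 as (? & ? & ? & ?); lra).
  exists (picard_sol (clamped_field p F1 F2 (K0 + 1)) x0). split; [|split].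
  - apply (clamped_sol_is_solution p F1 f1 F2 f2 Hp H1 H2 (K0 + 1) HM x0 Hx0 K0); lra.
  - apply (clamped_sol_spec p F1 f1 F2 f2 Hp H1 H2 (K0 + 1) HM x0).
  - exact (clamped_sol_nonneg p F1 f1 F2 f2 Hp H1 H2 (K0 + 1) HM x0 Hx0).
Qed.

Lemma equilibrium_E1 p F1 F2 Sb Vb Ib :
  is_equilibrium p F1 F2 (mkState Sb Vb Ib 0) ->
  Lam p = F1 Sb Ib + F2 Sb 0 + lam p * Sb /\ r p * Sb = mu p * Vb /\
  F1 Sb Ib = alpha1 p * Ib /\ F2 Sb 0 = 0.
Proof.
  intros Heq. unfold is_equilibrium, field in Heq. simpl in Heq.
  injection Heq. intros. lra.
Qed.

Lemma Rbar2_gt_1 p F2 Sb Vb :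
  0 < alpha2 p -> Rbar2 p F2 Sb Vb > 1 -> alpha2 p < d2 F2 Sb 0 + k p * Vb.
Proof.
  intros Ha HR. unfold Rbar2 in HR.
  replace (d2 F2 Sb 0 + k p * Vb) with (alpha2 p * (/ alpha2 p * d2 F2 Sb 0 + k p * Vb / alpha2 p))
    by (field; lra).
  nra.
Qed.

Lemma Rbar2_lt_1 p F2 Sb Vb :
  0 < alpha2 p -> Rbar2 p F2 Sb Vb < 1 -> d2 F2 Sb 0 + k p * Vb < alpha2 p.
Proof.
  intros Ha HR. unfold Rbar2 in HR.
  replace (d2 F2 Sb 0 + k p * Vb) with (alpha2 p * (/ alpha2 p * d2 F2 Sb 0 + k p * Vb / alpha2 p))
    by (field; lra).
  nra.
Qed.

Lemma I2_rate_near_E1 p F1 F2 f2 Sb Vb Ib sigma :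
  params_ok p -> incidence_hyp F2 f2 -> 0 < Sb ->
  sigma = d2 F2 Sb 0 + k p * Vb - alpha2 p -> 0 < sigma ->
  exists rho, 0 < rho /\ forall x, nonneg_state x -> dist4 x (mkState Sb Vb Ib 0) < rho ->
    sigma / 2 * sI2 x <= sI2 (field p F1 F2 x).
Proof.
  intros Hp H2 HSb Hsig Hpos.
  pose proof Hp as [_ [_ [_ [Hk _]]]].
  pose proof H2 as [_ [Hf2 _]].
  rewrite (incidence_d2_at_I0 F2 f2 H2) in Hsig by lra.
  destruct (continuous_R2_eps f2 Sb 0 (C2_continuous f2 Hf2 Sb 0) (sigma / 4)) as [d [Hd Hnear]];
    [lra|].
  set (rho := Rmin d (sigma / (4 * k p))).
  assert (Hrho : 0 < rho /\ rho <= d /\ k p * rho <= sigma / 4).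
  { unfold rho. split; [apply Rmin_pos; [lra|apply Rdiv_lt_0_compat; lra]|split; [apply Rmin_l|]].
    apply Rle_trans with (k p * (sigma / (4 * k p))); [apply Rmult_le_compat_l; [lra|apply Rmin_r]|].
    right. field. lra. }
  destruct Hrho as (Hrho0 & Hrhod & Hkrho).
  exists rho. split; [exact Hrho0|]. intros x [HS [HV [_ HI2]]] Hx.
  pose proof (component_dist_le x (mkState Sb Vb Ib 0) cS) as DS.
  pose proof (component_dist_le x (mkState Sb Vb Ib 0) cV) as DV.
  pose proof (component_dist_le x (mkState Sb Vb Ib 0) cI2) as DI.
  simpl in DS, DV, DI. rewrite Rminus_0_r in DI.
  assert (Hf : Rabs (f2 (sS x) (sI2 x) - f2 Sb 0) < sigma / 4)
    by (apply Hnear; [|rewrite Rminus_0_r]; lra).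
  assert (HVx : Rabs (sV x - Vb) < rho) by lra.
  apply Rabs_def2 in Hf. apply Rabs_def2 in HVx.
  assert (k p * (Vb - sV x) <= k p * rho) by (apply Rmult_le_compat_l; lra).
  unfold field; simpl. rewrite (incidence_factor F2 f2 H2) by assumption.
  replace (sI2 x * f2 (sS x) (sI2 x) + k p * sI2 x * sV x - alpha2 p * sI2 x)
    with ((f2 (sS x) (sI2 x) + k p * sV x - alpha2 p) * sI2 x) by ring.
  apply Rmult_le_compat_r; lra.
Qed.

Theorem E1_unstable p F1 f1 F2 f2 Sb Vb Ib :
  params_ok p -> incidence_hyp F1 f1 -> incidence_hyp F2 f2 -> 0 < Sb -> 0 <= Vb -> 0 <= Ib ->
  Rbar2 p F2 Sb Vb > 1 -> unstable p F1 F2 (mkState Sb Vb Ib 0).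
Proof.
  intros Hp H1 H2 HSb HVb HIb HR Hstable.
  pose proof (params_ok_rates p Hp) as [_ [_ Ha2]].
  set (sigma := d2 F2 Sb 0 + k p * Vb - alpha2 p).
  assert (Hsig : 0 < sigma) by (pose proof (Rbar2_gt_1 p F2 Sb Vb Ha2 HR); unfold sigma; lra).
  destruct (I2_rate_near_E1 p F1 F2 f2 Sb Vb Ib sigma Hp H2 HSb eq_refl Hsig) as [rho [Hrho Hrate]].
  destruct (Hstable rho Hrho) as [delta [Hdelta Hstay]].
  set (x0 := mkState Sb Vb Ib (delta / 2)).
  assert (Hx0 : nonneg_state x0) by (unfold x0, nonneg_state; simpl; repeat split; lra).
  destruct (exists_nonneg_solution p F1 f1 F2 f2 Hp H1 H2 x0 Hx0) as [X [Hsol [HX0 Hnn]]].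
  assert (Hd0 : dist4 (X 0) (mkState Sb Vb Ib 0) < delta).
  { apply Rle_lt_trans with (delta / 2); [|lra]. rewrite HX0. apply dist4_le.
    intros []; simpl; rewrite ?Rminus_diag, ?Rabs_R0, ?Rminus_0_r; try lra.
    rewrite Rabs_right; lra. }
  pose proof (Hstay X Hsol (Hnn 0 (Rle_refl 0)) Hd0) as Hnear.
  destruct Hsol as [Hder [_ [_ [_ Hright]]]].
  assert (Hlin : forall t, 0 <= t -> delta / 2 * (1 + sigma / 2 * t) <= sI2 (X t)).
  { replace (delta / 2) with (sI2 (X 0)) by now rewrite HX0.
    apply (growth_linear_lower_bound (fun t => sI2 (X t)) (fun t => sI2 (field p F1 F2 (X t))));
      [intros t Ht; apply (Hder t Ht)|exact Hright|lra|intros t Ht; apply (Hnn t Ht)|].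
    intros t Ht. apply Hrate; [apply Hnn|apply Hnear]; lra. }
  set (t1 := 4 * rho / (delta * sigma)).
  assert (Ht1 : 0 <= t1) by (unfold t1; apply Rlt_le, Rdiv_lt_0_compat; nra).
  pose proof (Hlin t1 Ht1) as Hbig.
  pose proof (component_dist_le (X t1) (mkState Sb Vb Ib 0) cI2) as DI.
  pose proof (Hnear t1 Ht1). simpl in DI. rewrite Rminus_0_r in DI.
  assert (delta / 2 * (1 + sigma / 2 * t1) = delta / 2 + rho) by (unfold t1; field; lra).
  pose proof (Rle_abs (sI2 (X t1))). lra.
Qed.

Lemma Rabs_mult_le x y X Y : Rabs x <= X -> Rabs y <= Y -> Rabs (x * y) <= X * Y.
Proof. intros. rewrite Rabs_mult. apply Rmult_le_compat; auto using Rabs_pos. Qed.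

Lemma is_derive_eq_R (f : R -> R) (x l l' : R) : is_derive f x l -> l = l' -> is_derive f x l'.
Proof. now intros H <-. Qed.

Ltac derive_R := repeat match goal with
  | |- is_derive (fun _ => ?c) _ _ => apply is_derive_const_R
  | |- is_derive (fun t => @?f t + @?g t) _ _ => apply (is_derive_plus_R f g)
  | |- is_derive (fun t => @?f t - @?g t) _ _ => apply (is_derive_minus_R f g)
  | |- is_derive (fun t => @?f t * @?g t) _ _ => apply (is_derive_mult_R f g)
  | H : is_derive ?s _ _ |- is_derive (fun t => ?s t) _ _ => exact H
  end.

Ltac right_limit_R := repeat match goal with
  | |- filterlim (fun _ => ?c) _ _ => apply filterlim_const
  | |- filterlim (fun t => @?f t + @?g t) _ _ => apply (filterlim_plus_R f g)
  | |- filterlim (fun t => @?f t - @?g t) _ _ => apply (filterlim_minus_R f g)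
  | |- filterlim (fun t => @?f t * @?g t) _ _ => apply (filterlim_mult_R f g)
  | H : filterlim ?s _ _ |- filterlim (fun t => ?s t) _ _ => exact H
  end.

(* A quadratic Lyapunov function for the linearisation of the model at E1, in the
   deviations (s, i, v, j) = (S - Sb, I1 - Ib, V1 - Vb, I2); the parameters will be
   a = dF1/dS (Sb, Ib), b = dF1/dI1 (Sb, Ib), la = lam, al1 = alpha1, beta = dF2/dI2 (Sb, 0)
   and delta = alpha2 - beta - k Vb.  The (s, i)-block is
   A = [[-pA, -b], [a, -qA]] with trace -tauA and determinant detA; since A + adj A = (tr A) I
   for 2x2 matrices, detA |z|^2 + |adj A z|^2 = gSS s^2 + 2 gSI s i + gII i^2 decreases at the
   rate 2 tauA detA |z|^2.  The weights wV and wI2 absorb the couplings of v and j through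
   completed squares. *)
Section Lyapunov.

Variables a b la al1 beta mu r k Vb delta : R.
Hypothesis a_pos : 0 < a.
Hypothesis la_pos : 0 < la.
Hypothesis b_le : b <= al1.
Hypothesis al1_pos : 0 < al1.
Hypothesis mu_pos : 0 < mu.
Hypothesis r_pos : 0 < r.
Hypothesis k_pos : 0 < k.
Hypothesis delta_pos : 0 < delta.

Definition qA := al1 - b.
Definition pA := a + la.
Definition detA := pA * qA + a * b.
Definition tauA := pA + qA.
Definition wV := mu * tauA * detA / (4 * (r * r)).
Definition gSS := detA + qA * qA + a * a.
Definition gSI := a * pA - qA * b.
Definition gII := detA + b * b + pA * pA.
Definition wI2 :=
  (1 + 2 * (beta * beta) * (gSS * gSS + gSI * gSI) / (tauA * detA) + 2 * wV * (k * k) * (Vb * Vb) / mu)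
  / (2 * delta).

Lemma qA_nonneg : 0 <= qA.
Proof. unfold qA. lra. Qed.

Lemma detA_pos : 0 < detA.
Proof.
  unfold detA, pA. pose proof qA_nonneg.
  replace ((a + la) * qA + a * b) with (la * qA + a * al1) by (unfold qA; ring).
  nra.
Qed.

Lemma tauA_pos : 0 < tauA.
Proof. unfold tauA, pA. pose proof qA_nonneg. lra. Qed.

Lemma wV_pos : 0 < wV.
Proof.
  unfold wV. pose proof detA_pos. pose proof tauA_pos.
  apply Rdiv_lt_0_compat; [repeat apply Rmult_lt_0_compat|]; nra.
Qed.

Lemma wI2_pos : 0 < wI2.
Proof.
  unfold wI2. pose proof detA_pos. pose proof tauA_pos. pose proof wV_pos.
  apply Rdiv_lt_0_compat; [|lra].
  assert (0 <= 2 * (beta * beta) * (gSS * gSS + gSI * gSI) / (tauA * detA)).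
  { apply Rdiv_le_0_compat; [|nra].
    pose proof (Rle_0_sqr beta). pose proof (Rle_0_sqr gSS). pose proof (Rle_0_sqr gSI).
    unfold Rsqr in *. nra. }
  assert (0 <= 2 * wV * (k * k) * (Vb * Vb) / mu).
  { apply Rdiv_le_0_compat; [|lra]. pose proof (Rle_0_sqr k). pose proof (Rle_0_sqr Vb).
    unfold Rsqr in *. apply Rmult_le_pos; [apply Rmult_le_pos|]; lra. }
  lra.
Qed.

Definition lyap (s i v j : R) :=
  detA * (s * s + i * i) + (qA * s - b * i) * (qA * s - b * i) + (a * s + pA * i) * (a * s + pA * i)
  + wV * (v * v) + wI2 * (j * j).

Definition lyap_deriv (s i v j ds di dv dj : R) :=
  2 * (gSS * s + gSI * i) * ds + 2 * (gSI * s + gII * i) * di + 2 * wV * v * dv + 2 * wI2 * j * dj.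

Definition lyap_deriv_lin (s i v j : R) :=
  lyap_deriv s i v j (- pA * s - b * i - beta * j) (a * s - qA * i)
             (r * s - mu * v - k * Vb * j) (- delta * j).

Definition lyap_deriv_nonlin (s i v j e1 e2 : R) :=
  2 * (gSS * s + gSI * i) * (- e1 - e2) + 2 * (gSI * s + gII * i) * e1
  + 2 * wV * v * (- k * j * v) + 2 * wI2 * j * (e2 + k * j * v).

Lemma lyap_deriv_split s i v j e1 e2 :
  lyap_deriv s i v j (- pA * s - b * i - beta * j - e1 - e2) (a * s - qA * i + e1)
             (r * s - mu * v - k * Vb * j - k * j * v) (- delta * j + e2 + k * j * v)
  = lyap_deriv_lin s i v j + lyap_deriv_nonlin s i v j e1 e2.
Proof. unfold lyap_deriv_lin, lyap_deriv_nonlin, lyap_deriv. ring. Qed.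

Lemma lyap_deriv_lin_squares s i v j :
  - tauA * detA * (s * s + i * i) - wV * mu * (v * v) - j * j - lyap_deriv_lin s i v j =
  tauA * detA / 2 * ((s + 2 * beta * gSS * j / (tauA * detA)) * (s + 2 * beta * gSS * j / (tauA * detA)))
  + tauA * detA / 2 * ((i + 2 * beta * gSI * j / (tauA * detA)) * (i + 2 * beta * gSI * j / (tauA * detA)))
  + tauA * detA / 2 * ((s - 2 * wV * r * v / (tauA * detA)) * (s - 2 * wV * r * v / (tauA * detA)))
  + wV * mu / 2 * ((v + 2 * k * Vb * j / mu) * (v + 2 * k * Vb * j / mu))
  + tauA * detA / 2 * (i * i).
Proof.
  pose proof detA_pos. pose proof tauA_pos.
  unfold lyap_deriv_lin, lyap_deriv, wI2, wV, gSS, gSI, gII. unfold detA, tauA, pA, qA in *.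
  field. repeat split; lra.
Qed.

Definition kappa := Rmin (Rmin (tauA * detA) (wV * mu)) 1.

Lemma kappa_pos : 0 < kappa.
Proof.
  unfold kappa. pose proof detA_pos. pose proof tauA_pos. pose proof wV_pos.
  repeat apply Rmin_pos; try lra; apply Rmult_lt_0_compat; lra.
Qed.

Lemma lyap_deriv_lin_le s i v j :
  lyap_deriv_lin s i v j <= - kappa * (s * s + i * i + v * v + j * j).
Proof.
  pose proof (lyap_deriv_lin_squares s i v j) as E.
  pose proof detA_pos. pose proof tauA_pos. pose proof wV_pos.
  assert (Hk1 : kappa <= tauA * detA) by (unfold kappa; eapply Rle_trans; [apply Rmin_l|apply Rmin_l]).
  assert (Hk2 : kappa <= wV * mu) by (unfold kappa; eapply Rle_trans; [apply Rmin_l|apply Rmin_r]).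
  assert (Hk3 : kappa <= 1) by (unfold kappa; apply Rmin_r).
  set (x1 := s + 2 * beta * gSS * j / (tauA * detA)) in *.
  set (x2 := i + 2 * beta * gSI * j / (tauA * detA)) in *.
  set (x3 := s - 2 * wV * r * v / (tauA * detA)) in *.
  set (x4 := v + 2 * k * Vb * j / mu) in *.
  assert (0 < tauA * detA) by (apply Rmult_lt_0_compat; lra).
  assert (0 < wV * mu) by (apply Rmult_lt_0_compat; lra).
  assert (0 <= tauA * detA / 2 * (x1 * x1)) by (apply Rmult_le_pos; [lra|apply Rle_0_sqr]).
  assert (0 <= tauA * detA / 2 * (x2 * x2)) by (apply Rmult_le_pos; [lra|apply Rle_0_sqr]).
  assert (0 <= tauA * detA / 2 * (x3 * x3)) by (apply Rmult_le_pos; [lra|apply Rle_0_sqr]).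
  assert (0 <= wV * mu / 2 * (x4 * x4)) by (apply Rmult_le_pos; [lra|apply Rle_0_sqr]).
  assert (0 <= tauA * detA / 2 * (i * i)) by (apply Rmult_le_pos; [lra|apply Rle_0_sqr]).
  pose proof (Rle_0_sqr s). pose proof (Rle_0_sqr i). pose proof (Rle_0_sqr v). pose proof (Rle_0_sqr j).
  unfold Rsqr in *.
  assert (kappa * (s * s) <= tauA * detA * (s * s)) by (apply Rmult_le_compat_r; lra).
  assert (kappa * (i * i) <= tauA * detA * (i * i)) by (apply Rmult_le_compat_r; lra).
  assert (kappa * (v * v) <= wV * mu * (v * v)) by (apply Rmult_le_compat_r; lra).
  assert (kappa * (j * j) <= 1 * (j * j)) by (apply Rmult_le_compat_r; lra).
  lra.
Qed.

Definition C_lin := 8 * (Rabs gSS + Rabs gSI) + 4 * (Rabs gSI + Rabs gII) + 4 * wI2.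
Definition C_quad := 2 * wV * k + 2 * wI2 * k.

Lemma lyap_deriv_nonlin_le s i v j e1 e2 nu eps :
  0 <= eps -> Rabs s <= nu -> Rabs i <= nu -> Rabs v <= nu -> Rabs j <= nu ->
  Rabs e1 <= 2 * eps * nu -> Rabs e2 <= 2 * eps * nu ->
  lyap_deriv_nonlin s i v j e1 e2 <= nu * nu * (eps * C_lin + nu * C_quad).
Proof.
  intros He Hs Hi Hv Hj H1 H2.
  assert (Hnu : 0 <= nu) by (eapply Rle_trans; [apply Rabs_pos|exact Hs]).
  pose proof wV_pos. pose proof wI2_pos.
  assert (Hlin : forall c1 c2 x y, Rabs x <= nu -> Rabs y <= nu ->
            Rabs (2 * (c1 * x + c2 * y)) <= 2 * (Rabs c1 + Rabs c2) * nu).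
  { intros c1 c2 x y Hx Hy. rewrite Rabs_mult, (Rabs_right 2) by lra.
    pose proof (Rabs_triang (c1 * x) (c2 * y)).
    pose proof (Rabs_mult_le c1 x _ _ (Rle_refl _) Hx).
    pose proof (Rabs_mult_le c2 y _ _ (Rle_refl _) Hy).
    lra. }
  assert (Hscaled : forall c x, 0 <= c -> Rabs x <= nu -> Rabs (2 * c * x) <= 2 * c * nu).
  { intros c x Hc Hx. rewrite Rabs_mult, (Rabs_right (2 * c)) by lra. apply Rmult_le_compat_l; lra. }
  assert (Hjv : Rabs (k * j * v) <= k * (nu * nu)).
  { rewrite Rmult_assoc, Rabs_mult, (Rabs_right k) by lra.
    apply Rmult_le_compat_l; [lra|now apply Rabs_mult_le]. }
  assert (B1 : Rabs (- e1 - e2) <= 4 * eps * nu).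
  { replace (- e1 - e2) with (- (e1 + e2)) by ring. rewrite Rabs_Ropp.
    pose proof (Rabs_triang e1 e2). lra. }
  assert (B3 : Rabs (- k * j * v) <= k * (nu * nu)).
  { replace (- k * j * v) with (- (k * j * v)) by ring. now rewrite Rabs_Ropp. }
  assert (B4 : Rabs (e2 + k * j * v) <= 2 * eps * nu + k * (nu * nu)).
  { pose proof (Rabs_triang e2 (k * j * v)). lra. }
  pose proof (Rabs_mult_le _ _ _ _ (Hlin gSS gSI s i Hs Hi) B1) as T1.
  pose proof (Rabs_mult_le _ _ _ _ (Hlin gSI gII s i Hs Hi) H1) as T2.
  pose proof (Rabs_mult_le _ _ _ _ (Hscaled wV v ltac:(lra) Hv) B3) as T3.
  pose proof (Rabs_mult_le _ _ _ _ (Hscaled wI2 j ltac:(lra) Hj) B4) as T4.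
  unfold lyap_deriv_nonlin.
  set (t1 := 2 * (gSS * s + gSI * i) * (- e1 - e2)) in *.
  set (t2 := 2 * (gSI * s + gII * i) * e1) in *.
  set (t3 := 2 * wV * v * (- k * j * v)) in *.
  set (t4 := 2 * wI2 * j * (e2 + k * j * v)) in *.
  pose proof (Rle_abs t1). pose proof (Rle_abs t2). pose proof (Rle_abs t3). pose proof (Rle_abs t4).
  apply Rle_trans with (2 * (Rabs gSS + Rabs gSI) * nu * (4 * eps * nu)
                        + 2 * (Rabs gSI + Rabs gII) * nu * (2 * eps * nu)
                        + 2 * wV * nu * (k * (nu * nu)) + 2 * wI2 * nu * (2 * eps * nu + k * (nu * nu)));
    [lra|unfold C_lin, C_quad; right; ring].
Qed.

Lemma is_derive_lyap (s i v j : R -> R) (t ds di dv dj : R) :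
  is_derive s t ds -> is_derive i t di -> is_derive v t dv -> is_derive j t dj ->
  is_derive (fun u => lyap (s u) (i u) (v u) (j u)) t (lyap_deriv (s t) (i t) (v t) (j t) ds di dv dj).
Proof.
  intros Hs Hi Hv Hj. unfold lyap.
  eapply is_derive_eq_R; [derive_R|]. unfold lyap_deriv, gSS, gSI, gII. ring.
Qed.

Lemma right_limit_lyap (s i v j : R -> R) :
  filterlim s (at_right 0) (locally (s 0)) -> filterlim i (at_right 0) (locally (i 0)) ->
  filterlim v (at_right 0) (locally (v 0)) -> filterlim j (at_right 0) (locally (j 0)) ->
  filterlim (fun u => lyap (s u) (i u) (v u) (j u)) (at_right 0) (locally (lyap (s 0) (i 0) (v 0) (j 0))).
Proof. intros Hs Hi Hv Hj. unfold lyap. right_limit_R. Qed.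

Definition lyap_lo := Rmin (Rmin detA wV) wI2.
Definition lyap_hi := detA + 2 * (qA * qA + b * b) + 2 * (a * a + pA * pA) + wV + wI2.

Lemma lyap_lo_pos : 0 < lyap_lo.
Proof.
  unfold lyap_lo. pose proof detA_pos. pose proof wV_pos. pose proof wI2_pos.
  repeat apply Rmin_pos; lra.
Qed.

Lemma lyap_lower s i v j : lyap_lo * (s * s + i * i + v * v + j * j) <= lyap s i v j.
Proof.
  unfold lyap. pose proof detA_pos. pose proof wV_pos. pose proof wI2_pos.
  assert (HL1 : lyap_lo <= detA) by (unfold lyap_lo; eapply Rle_trans; [apply Rmin_l|apply Rmin_l]).
  assert (HL2 : lyap_lo <= wV) by (unfold lyap_lo; eapply Rle_trans; [apply Rmin_l|apply Rmin_r]).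
  assert (HL3 : lyap_lo <= wI2) by (unfold lyap_lo; apply Rmin_r).
  pose proof (Rle_0_sqr s). pose proof (Rle_0_sqr i). pose proof (Rle_0_sqr v). pose proof (Rle_0_sqr j).
  pose proof (Rle_0_sqr (qA * s - b * i)). pose proof (Rle_0_sqr (a * s + pA * i)). unfold Rsqr in *.
  assert (lyap_lo * (s * s + i * i) <= detA * (s * s + i * i)) by (apply Rmult_le_compat_r; lra).
  assert (lyap_lo * (v * v) <= wV * (v * v)) by (apply Rmult_le_compat_r; lra).
  assert (lyap_lo * (j * j) <= wI2 * (j * j)) by (apply Rmult_le_compat_r; lra).
  lra.
Qed.

Lemma lyap_upper s i v j : lyap s i v j <= lyap_hi * (s * s + i * i + v * v + j * j).
Proof.
  unfold lyap, lyap_hi. pose proof detA_pos. pose proof wV_pos. pose proof wI2_pos.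
  assert ((qA * s - b * i) * (qA * s - b * i) <= 2 * (qA * qA + b * b) * (s * s + i * i)).
  { pose proof (Rle_0_sqr (qA * s + b * i)). pose proof (Rle_0_sqr (qA * i)).
    pose proof (Rle_0_sqr (b * s)).
    unfold Rsqr in *. nra. }
  assert ((a * s + pA * i) * (a * s + pA * i) <= 2 * (a * a + pA * pA) * (s * s + i * i)).
  { pose proof (Rle_0_sqr (a * s - pA * i)). pose proof (Rle_0_sqr (a * i)).
    pose proof (Rle_0_sqr (pA * s)).
    unfold Rsqr in *. nra. }
  pose proof (Rle_0_sqr s). pose proof (Rle_0_sqr i). pose proof (Rle_0_sqr v). pose proof (Rle_0_sqr j).
  pose proof (Rle_0_sqr qA). pose proof (Rle_0_sqr b).
  pose proof (Rle_0_sqr a). pose proof (Rle_0_sqr pA).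
  unfold Rsqr in *. nra.
Qed.

Lemma lyap_hi_pos : 0 < lyap_hi.
Proof.
  unfold lyap_hi. pose proof detA_pos. pose proof wV_pos. pose proof wI2_pos.
  pose proof (Rle_0_sqr qA). pose proof (Rle_0_sqr b).
  pose proof (Rle_0_sqr a). pose proof (Rle_0_sqr pA).
  unfold Rsqr in *. lra.
Qed.

End Lyapunov.

Section StabilityE1.

Variables (p : params) (F1 f1 F2 f2 : R -> R -> R) (Sb Vb Ib : R).
Hypothesis Hp : params_ok p.
Hypothesis H1 : incidence_hyp F1 f1.
Hypothesis H2 : incidence_hyp F2 f2.
Hypothesis HSb : 0 < Sb.
Hypothesis HIb : 0 < Ib.
Hypothesis Heq : is_equilibrium p F1 F2 (mkState Sb Vb Ib 0).
Hypothesis HR : Rbar2 p F2 Sb Vb < 1.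

Let E1 := mkState Sb Vb Ib 0.
Let a := d1 F1 Sb Ib.
Let b := d2 F1 Sb Ib.
Let beta := d2 F2 Sb 0.
Let delta := alpha2 p - beta - k p * Vb.

Lemma a_pos : 0 < a.
Proof. apply (incidence_d1_pos F1 f1 H1); assumption. Qed.

Lemma b_le_alpha1 : b <= alpha1 p.
Proof.
  destruct (equilibrium_E1 p F1 F2 Sb Vb Ib Heq) as (_ & _ & HF1 & _).
  rewrite (incidence_factor F1 f1 H1) in HF1 by lra.
  assert (f1 Sb Ib = alpha1 p) by (apply Rmult_eq_reg_l with Ib; lra).
  pose proof (incidence_d2_le F1 f1 H1 Sb Ib ltac:(lra) HIb). unfold b. lra.
Qed.

Lemma delta_pos : 0 < delta.
Proof.
  pose proof (params_ok_rates p Hp) as (_ & _ & Ha2).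
  pose proof (Rbar2_lt_1 p F2 Sb Vb Ha2 HR). unfold delta, beta. lra.
Qed.

Let mu_pos : 0 < mu p. Proof. apply Hp. Qed.
Let r_pos : 0 < r p. Proof. apply Hp. Qed.
Let k_pos : 0 < k p. Proof. apply Hp. Qed.
Let lam_pos : 0 < lam p. Proof. apply (params_ok_rates p Hp). Qed.
Let alpha1_pos : 0 < alpha1 p. Proof. apply (params_ok_rates p Hp). Qed.

Let lyapE := lyap a b (lam p) (alpha1 p) beta (mu p) (r p) (k p) Vb delta.
Let kap := kappa a b (lam p) (alpha1 p) (mu p) (r p).
Let lo := lyap_lo a b (lam p) (alpha1 p) beta (mu p) (r p) (k p) Vb delta.
Let hi := lyap_hi a b (lam p) (alpha1 p) beta (mu p) (r p) (k p) Vb delta.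

Definition dev_sq (x : state) :=
  (sS x - Sb) * (sS x - Sb) + (sI1 x - Ib) * (sI1 x - Ib) + (sV x - Vb) * (sV x - Vb) + sI2 x * sI2 x.

Definition lyap_state (x : state) := lyapE (sS x - Sb) (sI1 x - Ib) (sV x - Vb) (sI2 x).

Definition lyap_state_deriv (x : state) :=
  lyap_deriv a b (lam p) (alpha1 p) beta (mu p) (r p) (k p) Vb delta
    (sS x - Sb) (sI1 x - Ib) (sV x - Vb) (sI2 x)
    (sS (field p F1 F2 x)) (sI1 (field p F1 F2 x)) (sV (field p F1 F2 x)) (sI2 (field p F1 F2 x)).

Lemma dev_sq_nonneg x : 0 <= dev_sq x.
Proof.
  unfold dev_sq. pose proof (Rle_0_sqr (sS x - Sb)). pose proof (Rle_0_sqr (sI1 x - Ib)).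
  pose proof (Rle_0_sqr (sV x - Vb)). pose proof (Rle_0_sqr (sI2 x)). unfold Rsqr in *. lra.
Qed.

Lemma dist_sq_le_dev_sq x : dist4 x E1 * dist4 x E1 <= dev_sq x.
Proof.
  pose proof (dist4_sq_le x E1). unfold dev_sq, E1 in *. simpl in *. rewrite Rminus_0_r in *. lra.
Qed.

Lemma dev_sq_le_dist_sq x : dev_sq x <= 4 * (dist4 x E1 * dist4 x E1).
Proof.
  pose proof (sq_le_dist4_sq x E1). unfold dev_sq, E1 in *. simpl in *. rewrite Rminus_0_r in *. lra.
Qed.

Lemma lyap_state_bounds x : lo * dev_sq x <= lyap_state x <= hi * dev_sq x.
Proof.
  split; [apply lyap_lower|apply lyap_upper]; auto using a_pos, b_le_alpha1, delta_pos.
Qed.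

Lemma lyap_state_deriv_expansion x :
  let s := sS x - Sb in let i := sI1 x - Ib in let v := sV x - Vb in let j := sI2 x in
  lyap_state_deriv x =
  lyap_deriv_lin a b (lam p) (alpha1 p) beta (mu p) (r p) (k p) Vb delta s i v j
  + lyap_deriv_nonlin a b (lam p) (alpha1 p) beta (mu p) (r p) (k p) Vb delta s i v j
      (F1 (sS x) (sI1 x) - F1 Sb Ib - a * s - b * i)
      (F2 (sS x) (sI2 x) - F2 Sb 0 - d1 F2 Sb 0 * s - beta * j).
Proof.
  intros s i v j. destruct (equilibrium_E1 p F1 F2 Sb Vb Ib Heq) as (EL & EV & EF1 & EF2).
  rewrite <- lyap_deriv_split. unfold lyap_state_deriv. f_equal.
  all: unfold field, pA, qA, s, i, v, j, delta; simpl.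
  all: rewrite ?(incidence_d1_at_I0 F2 f2 H2 Sb HSb); lra.
Qed.

Lemma kap_pos : 0 < kap.
Proof. apply kappa_pos; auto using a_pos, b_le_alpha1. Qed.

Lemma linearization_remainders_small eps : 0 < eps -> exists rho, 0 < rho /\
  forall x, dist4 x E1 < rho ->
  Rabs (F1 (sS x) (sI1 x) - F1 Sb Ib - a * (sS x - Sb) - b * (sI1 x - Ib)) <= 2 * eps * dist4 x E1 /\
  Rabs (F2 (sS x) (sI2 x) - F2 Sb 0 - d1 F2 Sb 0 * (sS x - Sb) - beta * sI2 x) <= 2 * eps * dist4 x E1.
Proof.
  intros Heps.
  destruct (C2_linearization F1 (incidence_C2 F1 f1 H1) Sb Ib eps Heps) as [r1 [Hr1 HL1]].
  destruct (C2_linearization F2 (incidence_C2 F2 f2 H2) Sb 0 eps Heps) as [r2 [Hr2 HL2]].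
  exists (Rmin r1 r2). split; [now apply Rmin_pos|].
  intros x Hx. pose proof (Rmin_l r1 r2). pose proof (Rmin_r r1 r2).
  pose proof (component_dist_le x E1 cS) as Hs. pose proof (component_dist_le x E1 cI1) as Hi.
  pose proof (component_dist_le x E1 cI2) as Hj. simpl in Hs, Hi, Hj.
  split.
  - eapply Rle_trans; [apply HL1; lra|]. nra.
  - pose proof (HL2 (sS x) (sI2 x)) as HL2x. rewrite !Rminus_0_r in HL2x, Hj.
    eapply Rle_trans; [apply HL2x; lra|]. nra.
Qed.

Lemma lyap_dissipative : exists rho0, 0 < rho0 /\
  forall x, dist4 x E1 < rho0 -> lyap_state_deriv x <= - (kap / 2) * dev_sq x.
Proof.
  pose proof kap_pos as Hkap.
  set (c1 := C_lin a b (lam p) (alpha1 p) beta (mu p) (r p) (k p) Vb delta).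
  set (c2 := C_quad a b (lam p) (alpha1 p) beta (mu p) (r p) (k p) Vb delta).
  pose proof (Rabs_pos c1). pose proof (Rabs_pos c2). pose proof (Rle_abs c1). pose proof (Rle_abs c2).
  set (eps := kap / (4 * (Rabs c1 + 1))).
  set (r3 := kap / (4 * (Rabs c2 + 1))).
  assert (Heps : 0 < eps) by (apply Rdiv_lt_0_compat; lra).
  assert (Hr3 : 0 < r3) by (apply Rdiv_lt_0_compat; lra).
  destruct (linearization_remainders_small eps Heps) as [r12 [Hr12 Hrem]].
  exists (Rmin r12 r3). split; [now apply Rmin_pos|].
  intros x Hx. pose proof (Rmin_l r12 r3). pose proof (Rmin_r r12 r3).
  destruct (Hrem x ltac:(lra)) as [He1 He2].
  set (nu := dist4 x E1) in *.
  assert (Hs : Rabs (sS x - Sb) <= nu) by exact (component_dist_le x E1 cS).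
  assert (Hv : Rabs (sV x - Vb) <= nu) by exact (component_dist_le x E1 cV).
  assert (Hi : Rabs (sI1 x - Ib) <= nu) by exact (component_dist_le x E1 cI1).
  assert (Hj : Rabs (sI2 x) <= nu).
  { pose proof (component_dist_le x E1 cI2) as Hj. simpl in Hj. now rewrite Rminus_0_r in Hj. }
  pose proof (dist_sq_le_dev_sq x) as Hdev. fold nu in Hdev.
  assert (Hnu : 0 <= nu) by apply dist4_nonneg.
  rewrite lyap_state_deriv_expansion.
  unfold dev_sq in Hdev |- *.
  set (s := sS x - Sb) in *. set (i := sI1 x - Ib) in *. set (v := sV x - Vb) in *. set (j := sI2 x) in *.
  pose proof (lyap_deriv_lin_le a b (lam p) (alpha1 p) beta (mu p) (r p) (k p) Vb delta
                a_pos lam_pos b_le_alpha1 alpha1_pos mu_pos r_pos delta_pos s i v j) as Hlin.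
  pose proof (lyap_deriv_nonlin_le a b (lam p) (alpha1 p) beta (mu p) (r p) (k p) Vb delta
                a_pos lam_pos b_le_alpha1 alpha1_pos mu_pos r_pos k_pos delta_pos
                s i v j _ _ nu eps (Rlt_le _ _ Heps) Hs Hi Hv Hj He1 He2) as Hnonlin.
  fold kap c1 c2 in Hlin, Hnonlin.
  assert (eps * c1 <= kap / 4).
  { apply Rle_trans with (eps * (Rabs c1 + 1)); [apply Rmult_le_compat_l; lra|].
    right. unfold eps. field. lra. }
  assert (nu * c2 <= kap / 4).
  { apply Rle_trans with (r3 * (Rabs c2 + 1)); [nra|]. right. unfold r3. field. lra. }
  assert (nu * nu * (eps * c1 + nu * c2) <= (s * s + i * i + v * v + j * j) * (kap / 2)).
  { apply Rle_trans with (nu * nu * (kap / 2)); [apply Rmult_le_compat_l; nra|].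
    apply Rmult_le_compat_r; lra. }
  lra.
Qed.

Definition lyap_along (X : R -> state) (t : R) := lyap_state (X t).

Lemma is_derive_lyap_along X :
  is_solution p F1 F2 X -> forall t, 0 < t -> is_derive (lyap_along X) t (lyap_state_deriv (X t)).
Proof.
  intros [Hd _] t Ht. destruct (Hd t Ht) as (HdS & HdV & HdI1 & HdI2).
  assert (Hshift : forall (h : R -> R) c l, is_derive h t l -> is_derive (fun u => h u - c) t l).
  { intros h c l Hh.
    eapply is_derive_eq_R; [apply is_derive_minus_R; [exact Hh|apply is_derive_const_R]|ring]. }
  apply (is_derive_lyap a b (lam p) (alpha1 p) beta (mu p) (r p) (k p) Vb delta
           (fun u => sS (X u) - Sb) (fun u => sI1 (X u) - Ib) (fun u => sV (X u) - Vb) (fun u => sI2 (X u)));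
    [apply Hshift, HdS|apply Hshift, HdI1|apply Hshift, HdV|exact HdI2].
Qed.

Lemma right_limit_lyap_along X :
  is_solution p F1 F2 X -> filterlim (lyap_along X) (at_right 0) (locally (lyap_along X 0)).
Proof.
  intros (_ & HS & HV & HI1 & HI2).
  apply (right_limit_lyap a b (lam p) (alpha1 p) beta (mu p) (r p) (k p) Vb delta
           (fun u => sS (X u) - Sb) (fun u => sI1 (X u) - Ib) (fun u => sV (X u) - Vb) (fun u => sI2 (X u)));
    [| | |exact HI2]; apply filterlim_minus_R; [exact HS|apply filterlim_const|exact HI1
      |apply filterlim_const|exact HV|apply filterlim_const].
Qed.

Lemma lo_pos : 0 < lo.
Proof. apply lyap_lo_pos; auto using a_pos, b_le_alpha1, delta_pos. Qed.

Lemma hi_pos : 0 < hi.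
Proof. apply lyap_hi_pos; auto using a_pos, b_le_alpha1, delta_pos. Qed.

Lemma lyap_sublevel_in_ball x rho :
  0 < rho -> lyap_state x < lo * (rho * rho) -> dist4 x E1 < rho.
Proof.
  intros Hrho Hx. pose proof lo_pos. pose proof (proj1 (lyap_state_bounds x)).
  pose proof (dist_sq_le_dev_sq x). pose proof (dist4_nonneg x E1).
  destruct (Rlt_or_le (dist4 x E1) rho) as [|Hge]; [assumption|exfalso].
  assert (rho * rho <= dist4 x E1 * dist4 x E1) by (apply Rmult_le_compat; lra).
  assert (lo * (rho * rho) <= lo * dev_sq x) by (apply Rmult_le_compat_l; lra).
  lra.
Qed.

Lemma lyap_state_le_dist_sq x : lyap_state x <= 4 * hi * (dist4 x E1 * dist4 x E1).
Proof.
  pose proof hi_pos. pose proof (proj2 (lyap_state_bounds x)). pose proof (dev_sq_le_dist_sq x).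
  assert (hi * dev_sq x <= hi * (4 * (dist4 x E1 * dist4 x E1))) by (apply Rmult_le_compat_l; lra).
  lra.
Qed.

(* A solution starting deep inside the sublevel set {lyap < lo rho^2}, which lies in the
   rho-ball, cannot leave it, since lyap decreases wherever the dissipation estimate holds. *)
Lemma solutions_stay_near rho0 :
  (forall x, dist4 x E1 < rho0 -> lyap_state_deriv x <= - (kap / 2) * dev_sq x) ->
  forall rho, 0 < rho <= rho0 -> exists dl, 0 < dl /\ forall X, is_solution p F1 F2 X ->
    dist4 (X 0) E1 < dl -> forall t, 0 <= t -> dist4 (X t) E1 < rho.
Proof.
  intros Hdis rho [Hrho Hrho0]. pose proof lo_pos. pose proof hi_pos. pose proof kap_pos.
  set (cd := Rmin 1 (lo / (8 * hi))).
  assert (Hcd : 0 < cd) by (apply Rmin_pos; [lra|apply Rdiv_lt_0_compat; lra]).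
  assert (Hcd1 : cd <= 1) by apply Rmin_l.
  assert (Hcd2 : cd <= lo / (8 * hi)) by apply Rmin_r.
  exists (rho * cd). split; [apply Rmult_lt_0_compat; lra|].
  intros X Hsol HX0.
  set (level := lo * (rho * rho)).
  assert (Hlevel : 0 < level) by (apply Rmult_lt_0_compat; nra).
  assert (Hy0 : lyap_along X 0 < level).
  { pose proof (lyap_state_le_dist_sq (X 0)). set (nu := dist4 (X 0) E1) in *.
    assert (0 <= nu) by apply dist4_nonneg.
    assert (nu * nu <= (rho * cd) * (rho * cd)) by (apply Rmult_le_compat; lra).
    assert ((rho * cd) * (rho * cd) <= rho * rho * (lo / (8 * hi))).
    { replace ((rho * cd) * (rho * cd)) with (rho * rho * (cd * cd)) by ring.
      apply Rmult_le_compat_l; [nra|]. apply Rle_trans with (cd * 1); [apply Rmult_le_compat_l|]; lra. }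
    assert (4 * hi * (rho * rho * (lo / (8 * hi))) = level / 2) by (unfold level; field; lra).
    assert (4 * hi * (nu * nu) <= 4 * hi * (rho * rho * (lo / (8 * hi))))
      by (apply Rmult_le_compat_l; lra).
    unfold lyap_along. lra. }
  assert (Hdecr : forall t, 0 <= t -> lyap_along X t <= lyap_along X 0).
  { apply (barrier (lyap_along X) (fun t => lyap_state_deriv (X t)) (is_derive_lyap_along X Hsol)
             (right_limit_lyap_along X Hsol) (lyap_along X 0) level); [lra|].
    intros t Ht [_ Hlt]. pose proof (lyap_sublevel_in_ball (X t) rho Hrho Hlt).
    pose proof (Hdis (X t) ltac:(lra)). pose proof (dev_sq_nonneg (X t)). nra. }
  intros t Ht. apply lyap_sublevel_in_ball; [lra|].
  pose proof (Hdecr t Ht). unfold lyap_along, level in *. lra.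
Qed.

Theorem E1_loc_asymp_stable : loc_asymp_stable p F1 F2 E1.
Proof.
  destruct lyap_dissipative as [rho0 [Hrho0 Hdis]].
  pose proof lo_pos. pose proof hi_pos. pose proof kap_pos.
  split.
  - intros eps Heps.
    destruct (solutions_stay_near rho0 Hdis (Rmin rho0 eps)) as [dl [Hdl Hstay]];
      [split; [apply Rmin_pos; lra|apply Rmin_l]|].
    exists dl. split; [exact Hdl|]. intros X Hsol _ HX0 t Ht.
    eapply Rlt_le_trans; [exact (Hstay X Hsol HX0 t Ht)|apply Rmin_r].
  - destruct (solutions_stay_near rho0 Hdis rho0) as [dl [Hdl Hstay]]; [lra|].
    exists dl. split; [exact Hdl|]. intros X Hsol _ HX0.
    set (c := kap / (2 * hi)).
    assert (Hc : 0 < c) by (apply Rdiv_lt_0_compat; lra).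
    assert (Hdecay : forall t, 0 <= t -> lyap_along X t * exp (c * t) <= lyap_along X 0).
    { apply (exp_decay_bound _ _ c (is_derive_lyap_along X Hsol) (right_limit_lyap_along X Hsol)).
      intros t Ht. pose proof (Hdis (X t) (Hstay X Hsol HX0 t (Rlt_le _ _ Ht))).
      pose proof (proj2 (lyap_state_bounds (X t))).
      unfold lyap_along.
      assert (c * lyap_state (X t) <= c * (hi * dev_sq (X t))) by (apply Rmult_le_compat_l; lra).
      assert (c * (hi * dev_sq (X t)) = kap / 2 * dev_sq (X t)) by (unfold c; field; lra).
      lra. }
    apply (is_lim_of_sq_exp_bound _ (lyap_along X 0 / lo) c Hc); [intros; apply dist4_nonneg|].
    intros t Ht. pose proof (Hdecay t Ht). pose proof (exp_pos (c * t)).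
    pose proof (proj1 (lyap_state_bounds (X t))). pose proof (dist_sq_le_dev_sq (X t)).
    apply (Rmult_le_reg_l lo); [lra|].
    replace (lo * (lyap_along X 0 / lo)) with (lyap_along X 0) by (field; lra).
    apply Rle_trans with (lyap_along X t * exp (c * t)); [|lra].
    rewrite <- Rmult_assoc. apply Rmult_le_compat_r; [lra|]. unfold lyap_along.
    assert (lo * (dist4 (X t) E1 * dist4 (X t) E1) <= lo * dev_sq (X t))
      by (apply Rmult_le_compat_l; lra).
    lra.
Qed.

End StabilityE1.

Theorem mainTheorem7 (p : params) (F1 f1 F2 f2 : R -> R -> R)
    (Sb Vb Ib : R) :
  params_ok p ->
  incidence_hyp F1 f1 -> incidence_hyp F2 f2 ->
  0 < Sb -> 0 < Vb -> 0 < Ib ->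
  is_equilibrium p F1 F2 (mkState Sb Vb Ib 0) ->
  (Rbar2 p F2 Sb Vb > 1 -> unstable p F1 F2 (mkState Sb Vb Ib 0)) /\
  (Rbar2 p F2 Sb Vb < 1 -> loc_asymp_stable p F1 F2 (mkState Sb Vb Ib 0)).
Proof.
  intros Hp H1 H2 HSb HVb HIb Heq. split; intros HR.
  - apply (E1_unstable p F1 f1 F2 f2); try assumption; lra.
  - now apply (E1_loc_asymp_stable p F1 f1 F2 f2).
Qed.
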